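(* For $a=1$ one has $\rho_1(s)=\frac{\pi}{2}-2\arctan e^{-s}$ and $t_1(s)=\log\cosh s$ for all $s\in\mathbb{R}$, so $\rho_1$ takes values in $]-\pi/2,\pi/2[$ and the curve $\alpha_1$ is the graph $t=-\log\cos\rho$, $\rho\in\,]-\pi/2,\pi/2[$; it is a complete, open, embedded curve invariant under $(\rho,t)\mapsto(-\rho,t)$. The rotational surface $S(1)$ it generates is a complete, properly embedded, analytic, totally umbilic surface in $\mathbb{S}^2\times\mathbb{R}$ homeomorphic to $\mathbb{R}^2$.
   Context: $\mathbb{S}^2\times\mathbb{R}$ carries the product metric of the unit round sphere and the line. Fix a point $p\in\mathbb{S}^2$ and a unit-speed great circle $\gamma:\mathbb{R}\to\mathbb{S}^2$ with $\gamma(0)=p$; let $\Gamma=\gamma(\mathbb{R})$. On the totally geodesic cylinder $\Gamma\times\mathbb{R}$ use coordinates $(\rho,t)$, $\rho\in\mathbb{R}/2\pi\mathbb{Z}$, for the point $(\gamma(\rho),t)$; the induced metric is $d\rho^2+dt^2$. For a curve $\alpha$ in $\Gamma\times\mathbb{R}$, the rotational surface generated by $\alpha$ is the union of the images of $\alpha$ under the isometries $(q,t)\mapsto(R(q),t)$, $R$ ranging over the rotations of $\mathbb{S}^2$ fixing $p$. For $a>0$ let $\rho_a:\mathbb{R}\to\mathbb{R}$ be the solution of $\rho''=-a^2\sin\rho\cos\rho$, $\rho(0)=0$, $\rho'(0)=1$, let $t_a(s)=\int_0^s a\sin\rho_a(u)\,du$, let $\alpha_a(s)=(\rho_a(s)\bmod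 2\pi,\,t_a(s))$, and let $S(a)$ be the rotational surface generated by $\alpha_a$. Totally umbilic: the shape operator is at each point a multiple of the identity. *)

From Stdlib Require Import Reals.
From Coquelicot Require Import Coquelicot.
Open Scope R_scope.

Definition V3 := (R * R * R)%type.
Definition dot3 (a b : V3) : R :=
  let '(a1, a2, a3) := a in let '(b1, b2, b3) := b in a1 * b1 + a2 * b2 + a3 * b3.
Definition add3 (a b : V3) : V3 :=
  let '(a1, a2, a3) := a in let '(b1, b2, b3) := b in (a1 + b1, a2 + b2, a3 + b3).
Definition scal3 (k : R) (a : V3) : V3 :=
  let '(a1, a2, a3) := a in (k * a1, k * a2, k * a3).
Definition cross3 (a b : V3) : V3 :=
  let '(a1, a2, a3) := a in let '(b1, b2, b3) := b in
  (a2 * b3 - a3 * b2, a3 * b1 - a1 * b3, a1 * b2 - a2 * b1).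
Definition triple3 (a b c : V3) : R := dot3 (cross3 a b) c.

Definition on_sphere (q : V3) : Prop := dot3 q q = 1.

Definition is_rotation (f : V3 -> V3) : Prop :=
  (forall (a b : R) (u v : V3),
      f (add3 (scal3 a u) (scal3 b v)) = add3 (scal3 a (f u)) (scal3 b (f v))) /\
  (forall u v : V3, dot3 (f u) (f v) = dot3 u v) /\
  triple3 (f (1, 0, 0)) (f (0, 1, 0)) (f (0, 0, 1)) = 1.

Definition rotation_fixing (p : V3) (f : V3 -> V3) : Prop := is_rotation f /\ f p = p.

Definition unit_speed_great_circle (g : R -> V3) : Prop :=
  exists c w : V3, on_sphere c /\ on_sphere w /\ dot3 c w = 0 /\
    forall s, g s = add3 (scal3 (cos s) c) (scal3 (sin s) w).

Definition P4 := (V3 * R)%type.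
Definition coord4 (i : nat) (x : P4) : R :=
  let '((x1, x2, x3), x4) := x in
  match i with 0%nat => x1 | 1%nat => x2 | 2%nat => x3 | _ => x4 end.
Definition dot4 (x y : P4) : R := dot3 (fst x) (fst y) + snd x * snd y.
Definition sub4 (x y : P4) : P4 := (add3 (fst x) (scal3 (-1) (fst y)), snd x - snd y).
Definition in_S2xR (x : P4) : Prop := on_sphere (fst x).

Definition seq_cv4 (x : nat -> P4) (l : P4) : Prop :=
  is_lim_seq (fun n => dot4 (sub4 (x n) l) (sub4 (x n) l)) 0.

Definition dvec (f : R -> P4) (s : R) : P4 :=
  ((Derive (fun w => coord4 0 (f w)) s, Derive (fun w => coord4 1 (f w)) s,
    Derive (fun w => coord4 2 (f w)) s), Derive (fun w => coord4 3 (f w)) s).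

Definition Xu (X : R -> R -> P4) (u v : R) : P4 := dvec (fun w => X w v) u.
Definition Xv (X : R -> R -> P4) (u v : R) : P4 := dvec (fun w => X u w) v.
Definition Xuu (X : R -> R -> P4) (u v : R) : P4 := dvec (fun w => Xu X w v) u.
Definition Xuv (X : R -> R -> P4) (u v : R) : P4 := dvec (fun w => Xu X u w) v.
Definition Xvv (X : R -> R -> P4) (u v : R) : P4 := dvec (fun w => Xv X u w) v.

Definition is_rho_sol (a : R) (rho : R -> R) : Prop :=
  (forall s, ex_derive rho s) /\
  (forall s, is_derive (Derive rho) s (- a ^ 2 * sin (rho s) * cos (rho s))) /\
  rho 0 = 0 /\ Derive rho 0 = 1.

Definition t_fun (a : R) (rho : R -> R) (s : R) : R :=
  RInt (fun u => a * sin (rho u)) 0 s.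

(** The curve alpha in the cylinder Gamma x R, realized in S^2 x R ⊂ R^4:
    the point with cylinder coordinates (rho, t) is (gamma(rho), t). *)
Definition cyl_curve (gam : R -> V3) (rho t : R -> R) (s : R) : P4 := (gam (rho s), t s).

Definition rotational_surface (p : V3) (gam : R -> V3) (rho t : R -> R) (x : P4) : Prop :=
  exists (f : V3 -> V3) (s : R), rotation_fixing p f /\ x = (f (gam (rho s)), t s).

Definition analytic2 (f : R -> R -> R) : Prop :=
  forall u0 v0 : R, exists (c : nat -> nat -> R) (r : R), 0 < r /\
    forall u v, Rabs (u - u0) < r -> Rabs (v - v0) < r ->
      (forall m, ex_series (fun n => Rabs (c m n * (u - u0) ^ m * (v - v0) ^ n))) /\
      ex_series (fun m => Series (fun n => Rabs (c m n * (u - u0) ^ m * (v - v0) ^ n))) /\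
      f u v = Series (fun m => Series (fun n => c m n * (u - u0) ^ m * (v - v0) ^ n)).

Definition analytic_param (X : R -> R -> P4) : Prop :=
  forall i : nat, (i < 4)%nat -> analytic2 (fun u v => coord4 i (X u v)).

Definition regular_param (X : R -> R -> P4) : Prop :=
  forall u v, dot4 (Xu X u v) (Xu X u v) * dot4 (Xv X u v) (Xv X u v)
              - (dot4 (Xu X u v) (Xv X u v)) ^ 2 > 0.

Definition homeo_onto (X : R -> R -> P4) (S : P4 -> Prop) : Prop :=
  (forall x, S x <-> exists u v, x = X u v) /\
  (forall u v u' v', X u v = X u' v' -> u = u' /\ v = v') /\
  (forall (un vn : nat -> R) (u v : R),
      is_lim_seq un (Finite u) -> is_lim_seq vn (Finite v) ->
      seq_cv4 (fun n => X (un n) (vn n)) (X u v)) /\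
  (forall (un vn : nat -> R) (u v : R),
      seq_cv4 (fun n => X (un n) (vn n)) (X u v) ->
      is_lim_seq un (Finite u) /\ is_lim_seq vn (Finite v)).

(** Closed subset of R^4 (for a surface in the closed S^2 x R: properness of the inclusion). *)
Definition closed4 (S : P4 -> Prop) : Prop :=
  forall (x : nat -> P4) (l : P4), (forall n, S (x n)) -> seq_cv4 x l -> S l.

Definition totally_umbilic_param (X : R -> R -> P4) : Prop :=
  forall u v, exists (N : P4) (lam : R),
    dot3 (fst N) (fst (X u v)) = 0 /\ dot4 N N = 1 /\
    dot4 N (Xu X u v) = 0 /\ dot4 N (Xv X u v) = 0 /\
    dot4 (Xuu X u v) N = lam * dot4 (Xu X u v) (Xu X u v) /\
    dot4 (Xuv X u v) N = lam * dot4 (Xu X u v) (Xv X u v) /\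
    dot4 (Xvv X u v) N = lam * dot4 (Xv X u v) (Xv X u v).

(** Completeness of the induced metric: every divergent C^1 path
    [0,oo) -> surface has infinite length. *)
Definition complete_param (X : R -> R -> P4) : Prop :=
  forall c1 c2 : R -> R,
    (forall r, 0 <= r -> ex_derive c1 r /\ ex_derive c2 r /\
                         continuous (Derive c1) r /\ continuous (Derive c2) r) ->
    is_lim (fun r => c1 r ^ 2 + c2 r ^ 2) p_infty p_infty ->
    forall M : R, exists T : R, 0 <= T /\
      M < RInt (fun r => sqrt (dot4 (dvec (fun w => X (c1 w) (c2 w)) r)
                                    (dvec (fun w => X (c1 w) (c2 w)) r))) 0 T.

(* For [a = 1] the Cauchy problem is solved by the Gudermannian function
   [gd s = PI/2 - 2 atan (e^-s)], with [sin gd = tanh] and [cos gd = sech]; a Gronwall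
   estimate on the energy of the difference of two solutions gives [rho_1 = gd], and then
   [t_1 = int tanh = ln cosh].  In the frame [(p, w, p x w)] adapted to [gam], the surface
   [S(1)] is the graph [t = - ln <q, p>] over the open hemisphere [<q, p> > 0], with the global
   chart [X(u, v) = (sech u sech v p + tanh u w + sech u tanh v (p x w), ln cosh u + ln cosh v)].
   Its coefficients are analytic, [EG - F^2 = sech^2 u], the height
   [ln cosh u + ln cosh v >= |u| + |v| - 2 ln 2] bounds the length of divergent paths from below,
   and the normal [(p - <q, p> q, <q, p>)] has shape operator [<q, p> Id]. *)

From Stdlib Require Import Reals Lra Lia FunctionalExtensionality PropExtensionality.
From Coquelicot Require Import Coquelicot.
Open Scope R_scope.

Ltac unfold_R_ops :=
  unfold scal, mult, plus, opp, minus, zero, one; simpl;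
  unfold mult, plus, opp, zero, one; simpl.

Lemma is_derive_eq (f : R -> R) x l l' : is_derive f x l -> l = l' -> is_derive f x l'.
Proof. intros H ->; exact H. Qed.

Lemma is_derive_comp_R (g dg c : R -> R) r a :
  (forall x, is_derive g x (dg x)) -> is_derive c r a -> is_derive (fun r => g (c r)) r (dg (c r) * a).
Proof.
  intros Hg Hc. eapply is_derive_eq.
  - apply (is_derive_comp g c); [apply Hg | exact Hc].
  - unfold_R_ops. ring.
Qed.

Definition sech x := / cosh x.
Definition lncosh x := ln (cosh x).

Lemma cosh_pos x : 0 < cosh x.
Proof. unfold cosh. pose proof (exp_pos x). pose proof (exp_pos (- x)). lra. Qed.

Lemma cosh_sq_sub_sinh_sq x : cosh x ^ 2 - sinh x ^ 2 = 1.
Proof. unfold cosh, sinh. rewrite exp_Ropp. pose proof (exp_pos x). field. lra. Qed.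

Lemma sech_pos x : 0 < sech x.
Proof. apply Rinv_0_lt_compat, cosh_pos. Qed.

Lemma tanh_sq_add_sech_sq x : tanh x ^ 2 + sech x ^ 2 = 1.
Proof.
  unfold tanh, sech. pose proof (cosh_sq_sub_sinh_sq x). pose proof (cosh_pos x).
  apply (Rmult_eq_reg_r (cosh x ^ 2)); [field_simplify; lra | nra].
Qed.

Lemma sech_eq_sqrt x : sech x = sqrt (1 - tanh x ^ 2).
Proof.
  rewrite <- (sqrt_pow2 (sech x)) by (left; apply sech_pos).
  f_equal. pose proof (tanh_sq_add_sech_sq x). lra.
Qed.

Lemma tanh_bound x : -1 < tanh x < 1.
Proof.
  pose proof (tanh_sq_add_sech_sq x). pose proof (sech_pos x). nra.
Qed.

Lemma tanh_exp x : tanh x = (exp (2 * x) - 1) / (exp (2 * x) + 1).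
Proof.
  unfold tanh, sinh, cosh. rewrite exp_Ropp.
  replace (2 * x) with (x + x) by ring. rewrite exp_plus.
  pose proof (exp_pos x). field. split; nra.
Qed.

Lemma lncosh_eq_opp_ln_sech x : lncosh x = - ln (sech x).
Proof. unfold lncosh, sech. rewrite ln_Rinv by apply cosh_pos. ring. Qed.

(* [cosh x >= e^|x| / 2] *)
Lemma lncosh_ge_abs x : Rabs x - ln 2 <= lncosh x.
Proof.
  assert (Hc : exp (Rabs x) / 2 <= cosh x).
  { unfold cosh. pose proof (exp_pos x). pose proof (exp_pos (- x)).
    unfold Rabs; destruct (Rcase_abs x); lra. }
  replace (Rabs x - ln 2) with (ln (exp (Rabs x) / 2)).
  - apply ln_le; [pose proof (exp_pos (Rabs x)); lra | exact Hc].
  - unfold Rdiv. rewrite ln_mult, ln_exp, ln_Rinv; try lra; apply exp_pos || lra.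
Qed.

Lemma is_derive_cosh x : is_derive cosh x (sinh x).
Proof. apply is_derive_Reals, derivable_pt_lim_cosh. Qed.

Lemma is_derive_sinh x : is_derive sinh x (cosh x).
Proof. apply is_derive_Reals, derivable_pt_lim_sinh. Qed.

Lemma is_derive_sech x : is_derive sech x (- sech x * tanh x).
Proof.
  pose proof (cosh_pos x). eapply is_derive_eq.
  - apply (is_derive_inv cosh); [apply is_derive_cosh | lra].
  - unfold sech, tanh. simpl. field. lra.
Qed.

Lemma is_derive_tanh x : is_derive tanh x (sech x ^ 2).
Proof.
  pose proof (cosh_pos x). pose proof (cosh_sq_sub_sinh_sq x). eapply is_derive_eq.
  - apply (is_derive_div sinh cosh); [apply is_derive_sinh | apply is_derive_cosh | lra].
  - unfold sech. simpl. field_simplify; [|lra|lra]. f_equal. lra.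
Qed.

Lemma is_derive_lncosh x : is_derive lncosh x (tanh x).
Proof.
  pose proof (cosh_pos x). eapply is_derive_eq.
  - apply (is_derive_comp ln cosh).
    + apply is_derive_Reals, derivable_pt_lim_ln. exact H.
    + apply is_derive_cosh.
  - unfold tanh. unfold_R_ops. field. lra.
Qed.

Lemma continuous_sech x : continuous sech x.
Proof. apply (ex_derive_continuous sech). eexists. apply is_derive_sech. Qed.

Lemma continuous_tanh x : continuous tanh x.
Proof. apply (ex_derive_continuous tanh). eexists. apply is_derive_tanh. Qed.

Lemma continuous_lncosh x : continuous lncosh x.
Proof. apply (ex_derive_continuous lncosh). eexists. apply is_derive_lncosh. Qed.

Definition artanh y := ln ((1 + y) / (1 - y)) / 2.

Lemma artanh_tanh x : artanh (tanh x) = x.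
Proof.
  unfold artanh. rewrite tanh_exp. pose proof (exp_pos (2 * x)).
  replace ((1 + (exp (2 * x) - 1) / (exp (2 * x) + 1)) / (1 - (exp (2 * x) - 1) / (exp (2 * x) + 1)))
    with (exp (2 * x)) by (field; lra).
  rewrite ln_exp. field.
Qed.

Lemma tanh_artanh y : -1 < y < 1 -> tanh (artanh y) = y.
Proof.
  intros Hy. rewrite tanh_exp. unfold artanh.
  replace (2 * (ln ((1 + y) / (1 - y)) / 2)) with (ln ((1 + y) / (1 - y))) by field.
  rewrite exp_ln by (apply Rdiv_lt_0_compat; lra). field. split; lra.
Qed.

Lemma tanh_inj x y : tanh x = tanh y -> x = y.
Proof. intros H. rewrite <- (artanh_tanh x), <- (artanh_tanh y), H. reflexivity. Qed.

Lemma continuous_artanh y : -1 < y < 1 -> continuous artanh y.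
Proof.
  intros Hy. apply (ex_derive_continuous artanh). unfold artanh. auto_derive.
  repeat split; try apply Rdiv_lt_0_compat; lra.
Qed.

(** * Uniqueness for [psi'' = F psi] with Lipschitz [F] *)

Lemma derive_nonpos_antitone (f df : R -> R) a b :
  a <= b -> (forall x, is_derive f x (df x)) -> (forall x, df x <= 0) -> f b <= f a.
Proof.
  intros Hab Hd Hneg.
  destruct (MVT_gen f a b df) as [c [_ Heq]].
  - intros; apply Hd.
  - intros. apply continuity_pt_filterlim, (ex_derive_continuous f). eexists; apply Hd.
  - specialize (Hneg c). nra.
Qed.

(* Gronwall: [E e^(-K s)] decreases for [s >= 0] and [E e^(K s)] increases for [s <= 0]. *)
Lemma gronwall_zero (E dE : R -> R) K :
  (forall s, is_derive E s (dE s)) -> (forall s, 0 <= E s) ->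
  (forall s, Rabs (dE s) <= K * E s) -> E 0 = 0 -> forall s, E s = 0.
Proof.
  intros HE Enn Hb HE0 s.
  assert (Hw : forall k x, is_derive (fun s => E s * exp (k * s)) x ((dE x + k * E x) * exp (k * x))).
  { intros k x. eapply is_derive_eq.
    - apply (is_derive_mult E (fun s => exp (k * s))); [apply HE | | intros; apply Rmult_comm].
      auto_derive; [exact I | reflexivity].
    - unfold_R_ops. ring. }
  destruct (Rle_dec 0 s) as [Hs | Hs].
  - assert (H : E s * exp (- K * s) <= E 0 * exp (- K * 0)).
    { apply (derive_nonpos_antitone _ _ 0 s Hs (Hw (- K))).
      intros x. pose proof (exp_pos (- K * x)). pose proof (Hb x).
      apply Rabs_le_between in H0. nra. }
    rewrite HE0 in H. pose proof (exp_pos (- K * s)). pose proof (Enn s). nra.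
  - assert (H : - (E 0 * exp (K * 0)) <= - (E s * exp (K * s))).
    { apply (derive_nonpos_antitone (fun s => - (E s * exp (K * s)))
               (fun x => - ((dE x + K * E x) * exp (K * x))) s 0); [lra | |].
      - intros x. apply (is_derive_opp (fun s => E s * exp (K * s))), Hw.
      - intros x. pose proof (exp_pos (K * x)). pose proof (Hb x).
        apply Rabs_le_between in H0. nra. }
    rewrite HE0 in H. pose proof (exp_pos (K * s)). pose proof (Enn s). nra.
Qed.

Section SecondOrderUniqueness.

Variables (F : R -> R) (L : R).
Hypothesis F_lipschitz : forall x y, Rabs (F x - F y) <= L * Rabs (x - y).

Definition solves_second_order (psi : R -> R) :=
  (forall s, ex_derive psi s) /\ forall s, is_derive (Derive psi) s (F (psi s)).

(* The energy [(psi - phi)^2 + (psi' - phi')^2] satisfies [|E'| <= (1 + L) E]. *)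
Lemma second_order_unique psi phi :
  solves_second_order psi -> solves_second_order phi ->
  psi 0 = phi 0 -> Derive psi 0 = Derive phi 0 -> forall s, psi s = phi s.
Proof.
  intros [Hpsi Hpsi'] [Hphi Hphi'] H0 H0'.
  assert (HL : 0 <= L).
  { specialize (F_lipschitz 1 0). pose proof (Rabs_pos (F 1 - F 0)).
    rewrite Rminus_0_r, Rabs_R1 in F_lipschitz. lra. }
  set (d := fun s => psi s - phi s). set (e := fun s => Derive psi s - Derive phi s).
  set (E := fun s => d s ^ 2 + e s ^ 2).
  set (dE := fun s => 2 * d s * e s + 2 * e s * (F (psi s) - F (phi s))).
  assert (HE : forall s, is_derive E s (dE s)).
  { intros s. eapply is_derive_eq.
    - apply (is_derive_plus (fun s => d s ^ 2) (fun s => e s ^ 2)).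
      + apply (is_derive_pow d). apply (is_derive_minus psi phi); apply Derive_correct; auto.
      + apply (is_derive_pow e). apply (is_derive_minus (Derive psi) (Derive phi)); auto.
    - unfold dE, d, e. unfold_R_ops. ring. }
  assert (Hb : forall s, Rabs (dE s) <= (1 + L) * E s).
  { intros s. unfold dE, E.
    pose proof (F_lipschitz (psi s) (phi s)) as Hg. fold (d s) in Hg.
    rewrite <- (pow2_abs (d s)), <- (pow2_abs (e s)).
    set (a := Rabs (d s)) in *. set (b := Rabs (e s)).
    set (g := Rabs (F (psi s) - F (phi s))) in *.
    assert (Hab : 2 * a * b <= a ^ 2 + b ^ 2) by (pose proof (pow2_ge_0 (a - b)); lra).
    assert (Hbg : b * g <= L * (a * b)).
    { pose proof (Rabs_pos (e s)). fold b in H. nra. }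
    eapply Rle_trans; [apply Rabs_triang|]. rewrite !Rabs_mult, !Rabs_pos_eq by lra.
    fold a b g. pose proof (Rmult_le_compat_l L _ _ HL Hab). nra. }
  assert (Ez := gronwall_zero E dE (1 + L) HE
                  (fun s => Rplus_le_le_0_compat _ _ (pow2_ge_0 _) (pow2_ge_0 _)) Hb
                  ltac:(unfold E, d, e; rewrite H0, H0'; ring)).
  intros s. specialize (Ez s). unfold E in Ez.
  pose proof (pow2_ge_0 (d s)). pose proof (pow2_ge_0 (e s)).
  assert (Hd : (d s)² = 0) by (unfold Rsqr; lra). apply Rsqr_eq_0 in Hd. unfold d in Hd. lra.
Qed.

End SecondOrderUniqueness.

Lemma sin_cos_lipschitz x y : Rabs (sin x * cos x - sin y * cos y) <= 1 * Rabs (x - y).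
Proof.
  apply (bounded_variation (fun z => sin z * cos z) (fun z => cos z * cos z - sin z * sin z)).
  intros t _. split.
  - auto_derive; [exact I | ring].
  - pose proof (sin2_cos2 t). unfold Rsqr in H. apply Rabs_le. nra.
Qed.

(** * The Gudermannian function *)

Definition gd (s : R) := PI / 2 - 2 * atan (exp (- s)).

Lemma gd_bound s : - (PI / 2) < gd s < PI / 2.
Proof.
  assert (0 < atan (exp (- s))) by (rewrite <- atan_0; apply atan_increasing, exp_pos).
  pose proof (atan_bound (exp (- s))). unfold gd. lra.
Qed.

Lemma gd_0 : gd 0 = 0.
Proof. unfold gd. rewrite Ropp_0, exp_0, atan_1. field. Qed.

Lemma gd_odd s : gd (- s) = - gd s.
Proof.
  unfold gd. rewrite Ropp_involutive, <- (Rinv_inv (exp s)), <- exp_Ropp.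
  rewrite atan_inv by apply exp_pos. ring.
Qed.

Lemma sech_exp u : sech u = 2 * exp (- u) / (1 + exp (- u) ^ 2).
Proof.
  unfold sech, cosh. rewrite <- (Rinv_inv (exp u)), <- exp_Ropp.
  pose proof (exp_pos (- u)). field. nra.
Qed.

Lemma tanh_exp_opp u : tanh u = (1 - exp (- u) ^ 2) / (1 + exp (- u) ^ 2).
Proof.
  unfold tanh, sinh, cosh. rewrite <- (Rinv_inv (exp u)), <- exp_Ropp.
  pose proof (exp_pos (- u)). field. nra.
Qed.

Lemma cos_atan_sq x : cos (atan x) * cos (atan x) = / (1 + x ^ 2).
Proof.
  rewrite cos_atan. assert (H : 0 < 1 + x²) by (unfold Rsqr; nra).
  pose proof (sqrt_lt_R0 _ H).
  replace (1 / sqrt (1 + x²) * (1 / sqrt (1 + x²))) with (/ (sqrt (1 + x²) * sqrt (1 + x²)))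
    by (field; lra).
  rewrite sqrt_sqrt by lra. unfold Rsqr. f_equal. ring.
Qed.

Lemma sin_atan_mul_cos_atan x : sin (atan x) * cos (atan x) = x / (1 + x ^ 2).
Proof.
  rewrite sin_atan, cos_atan. assert (H : 0 < 1 + x²) by (unfold Rsqr; nra).
  pose proof (sqrt_lt_R0 _ H).
  replace (x / sqrt (1 + x²) * (1 / sqrt (1 + x²))) with (x / (sqrt (1 + x²) * sqrt (1 + x²)))
    by (field; lra).
  rewrite sqrt_sqrt by lra. unfold Rsqr. f_equal. ring.
Qed.

Lemma sin_gd s : sin (gd s) = tanh s.
Proof.
  unfold gd. rewrite sin_shift, cos_2a_cos, Rmult_assoc, cos_atan_sq, tanh_exp_opp.
  pose proof (exp_pos (- s)). field. nra.
Qed.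

Lemma cos_gd s : cos (gd s) = sech s.
Proof.
  unfold gd. rewrite cos_shift, sin_2a, Rmult_assoc, sin_atan_mul_cos_atan, sech_exp.
  pose proof (exp_pos (- s)). field. nra.
Qed.

Lemma is_derive_gd s : is_derive gd s (sech s).
Proof.
  unfold gd. eapply is_derive_eq.
  - apply (is_derive_minus (fun _ => PI / 2) (fun s => 2 * atan (exp (- s)))).
    + apply is_derive_const.
    + apply (is_derive_scal (fun s => atan (exp (- s)))).
      apply (is_derive_comp atan (fun s => exp (- s))).
      * apply is_derive_Reals, derivable_pt_lim_atan.
      * auto_derive; [exact I | reflexivity].
  - rewrite sech_exp. unfold_R_ops. pose proof (exp_pos (- s)). field. nra.
Qed.

Lemma Derive_gd s : Derive gd s = sech s.
Proof. apply is_derive_unique, is_derive_gd. Qed.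

Lemma rho_eq_gd rho : is_rho_sol 1 rho -> forall s, rho s = gd s.
Proof.
  intros [Hd [Hdd [H0 H0']]].
  apply (second_order_unique (fun x => - 1 ^ 2 * sin x * cos x) 1).
  - intros x y. replace (- 1 ^ 2 * sin x * cos x - - 1 ^ 2 * sin y * cos y)
      with (- (sin x * cos x - sin y * cos y)) by ring.
    rewrite Rabs_Ropp. apply sin_cos_lipschitz.
  - split; assumption.
  - split; [intros s; eexists; apply is_derive_gd |].
    intros s. apply (is_derive_ext sech); [intros; symmetry; apply Derive_gd |].
    eapply is_derive_eq; [apply is_derive_sech |].
    rewrite sin_gd, cos_gd. unfold tanh, sech. pose proof (cosh_pos s). simpl. field. lra.
  - rewrite gd_0. exact H0.
  - rewrite Derive_gd, H0'. unfold sech. rewrite cosh_0. symmetry. apply Rinv_1.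
Qed.

Lemma t_fun_eq_lncosh rho : is_rho_sol 1 rho -> forall s, t_fun 1 rho s = lncosh s.
Proof.
  intros Hrho s. unfold t_fun.
  rewrite (RInt_ext _ tanh) by (intros x _; rewrite (rho_eq_gd rho Hrho), sin_gd; apply Rmult_1_l).
  rewrite (is_RInt_unique _ _ _ _
             (is_RInt_derive lncosh tanh 0 s (fun x _ => is_derive_lncosh x)
                (fun x _ => continuous_tanh x))).
  unfold lncosh. rewrite cosh_0, ln_1. unfold_R_ops. ring.
Qed.

Lemma dot3_comm u v : dot3 u v = dot3 v u.
Proof. destruct u as [[? ?] ?], v as [[? ?] ?]; simpl; ring. Qed.

Lemma cross3_dot_l p w : dot3 (cross3 p w) p = 0.
Proof. destruct p as [[? ?] ?], w as [[? ?] ?]; simpl; ring. Qed.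

Lemma cross3_dot_r p w : dot3 (cross3 p w) w = 0.
Proof. destruct p as [[? ?] ?], w as [[? ?] ?]; simpl; ring. Qed.

Lemma cross3_dot_cross3 p w :
  dot3 (cross3 p w) (cross3 p w) = dot3 p p * dot3 w w - dot3 p w ^ 2.
Proof. destruct p as [[? ?] ?], w as [[? ?] ?]; simpl; ring. Qed.

Definition orthonormal_pair (p w : V3) := on_sphere p /\ on_sphere w /\ dot3 p w = 0.

Definition frame_vec (p w : V3) (a b c : R) : V3 :=
  add3 (add3 (scal3 a p) (scal3 b w)) (scal3 c (cross3 p w)).

Lemma dot3_frame_vec p w a b c x :
  dot3 (frame_vec p w a b c) x = a * dot3 p x + b * dot3 w x + c * dot3 (cross3 p w) x.
Proof. destruct p as [[? ?] ?], w as [[? ?] ?], x as [[? ?] ?]; simpl; ring. Qed.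

Definition rodrigues (p : V3) (c s : R) (x : V3) : V3 :=
  add3 (add3 (scal3 c x) (scal3 s (cross3 p x))) (scal3 ((1 - c) * dot3 p x) p).

Lemma rotation_fixing_dot p f u v : rotation_fixing p f -> dot3 (f u) (f v) = dot3 u v.
Proof. intros [[_ [Hd _]] _]. apply Hd. Qed.

Lemma rotation_fixing_dot_axis p f u : rotation_fixing p f -> dot3 (f u) p = dot3 u p.
Proof. intros Hf. rewrite <- (proj2 Hf) at 1. apply (rotation_fixing_dot p), Hf. Qed.

Section Frame.

Variables p w : V3.
Hypothesis Hpw : orthonormal_pair p w.

Local Notation n := (cross3 p w).

Lemma frame_vec_dot_p a b c : dot3 (frame_vec p w a b c) p = a.
Proof.
  destruct Hpw as [Hp [_ Hpw0]]. unfold on_sphere in Hp.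
  rewrite dot3_frame_vec, Hp, (dot3_comm w p), Hpw0, cross3_dot_l. ring.
Qed.

Lemma frame_vec_dot_w a b c : dot3 (frame_vec p w a b c) w = b.
Proof.
  destruct Hpw as [_ [Hw Hpw0]]. unfold on_sphere in Hw.
  rewrite dot3_frame_vec, Hw, Hpw0, cross3_dot_r. ring.
Qed.

Lemma frame_vec_dot_n a b c : dot3 (frame_vec p w a b c) n = c.
Proof.
  destruct Hpw as [Hp [Hw Hpw0]]. unfold on_sphere in Hp, Hw.
  rewrite dot3_frame_vec, cross3_dot_cross3, Hp, Hw, Hpw0,
    (dot3_comm p), (dot3_comm w), cross3_dot_l, cross3_dot_r. ring.
Qed.

Lemma frame_vec_dot a b c a' b' c' :
  dot3 (frame_vec p w a b c) (frame_vec p w a' b' c') = a * a' + b * b' + c * c'.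
Proof.
  rewrite dot3_frame_vec, !(dot3_comm _ (frame_vec _ _ _ _ _)),
    frame_vec_dot_p, frame_vec_dot_w, frame_vec_dot_n. ring.
Qed.

(* Cramer's rule for the Gram system of [(p, w, p x w)], whose determinant is [1]. *)
Lemma frame_vec_coords q : q = frame_vec p w (dot3 q p) (dot3 q w) (dot3 q n).
Proof.
  destruct Hpw as [Hp [Hw Hpw0]]. unfold on_sphere in *.
  destruct p as [[p1 p2] p3], w as [[w1 w2] w3], q as [[q1 q2] q3].
  unfold frame_vec; simpl in *.
  set (P := p1 * p1 + p2 * p2 + p3 * p3) in *. set (W := w1 * w1 + w2 * w2 + w3 * w3) in *.
  set (K := p1 * w1 + p2 * w2 + p3 * w3) in *.
  set (qp := q1 * p1 + q2 * p2 + q3 * p3). set (qw := q1 * w1 + q2 * w2 + q3 * w3).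
  set (qn := q1 * (p2 * w3 - p3 * w2) + q2 * (p3 * w1 - p1 * w3) + q3 * (p1 * w2 - p2 * w1)).
  assert (E1 : (P * W - K ^ 2) * q1
               = (qp * W - qw * K) * p1 + (qw * P - qp * K) * w1 + qn * (p2 * w3 - p3 * w2))
    by (unfold P, W, K, qp, qw, qn; ring).
  assert (E2 : (P * W - K ^ 2) * q2
               = (qp * W - qw * K) * p2 + (qw * P - qp * K) * w2 + qn * (p3 * w1 - p1 * w3))
    by (unfold P, W, K, qp, qw, qn; ring).
  assert (E3 : (P * W - K ^ 2) * q3
               = (qp * W - qw * K) * p3 + (qw * P - qp * K) * w3 + qn * (p1 * w2 - p2 * w1))
    by (unfold P, W, K, qp, qw, qn; ring).
  rewrite Hp, Hw, Hpw0 in E1, E2, E3.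
  f_equal; [f_equal|]; lra.
Qed.

Lemma dot3_parseval u v : dot3 u v = dot3 u p * dot3 v p + dot3 u w * dot3 v w + dot3 u n * dot3 v n.
Proof. rewrite (frame_vec_coords u) at 1. rewrite (frame_vec_coords v) at 1. apply frame_vec_dot. Qed.

Lemma eq_of_frame_coords u v :
  dot3 u p = dot3 v p -> dot3 u w = dot3 v w -> dot3 u n = dot3 v n -> u = v.
Proof.
  intros H1 H2 H3. rewrite (frame_vec_coords u), (frame_vec_coords v), H1, H2, H3. reflexivity.
Qed.

Lemma rodrigues_dot_p c s x : dot3 (rodrigues p c s x) p = dot3 x p.
Proof.
  destruct Hpw as [Hp _]. unfold on_sphere in Hp.
  transitivity ((c + (1 - c) * dot3 p p) * dot3 x p).
  - destruct p as [[? ?] ?], x as [[? ?] ?]; simpl; ring.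
  - rewrite Hp. ring.
Qed.

Lemma rodrigues_dot_w c s x : dot3 (rodrigues p c s x) w = c * dot3 x w - s * dot3 x n.
Proof.
  destruct Hpw as [_ [_ Hpw0]].
  transitivity (c * dot3 x w - s * dot3 x n + (1 - c) * dot3 p x * dot3 p w).
  - destruct p as [[? ?] ?], x as [[? ?] ?], w as [[? ?] ?]; simpl; ring.
  - rewrite Hpw0. ring.
Qed.

Lemma rodrigues_dot_n c s x : dot3 (rodrigues p c s x) n = s * dot3 x w + c * dot3 x n.
Proof.
  destruct Hpw as [Hp [_ Hpw0]]. unfold on_sphere in Hp.
  transitivity (s * (dot3 p p * dot3 x w - dot3 p w * dot3 x p) + c * dot3 x n).
  - destruct p as [[? ?] ?], x as [[? ?] ?], w as [[? ?] ?]; simpl; ring.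
  - rewrite Hp, Hpw0. ring.
Qed.

Lemma rodrigues_rotation_fixing c s : c ^ 2 + s ^ 2 = 1 -> rotation_fixing p (rodrigues p c s).
Proof.
  intros Hcs. split; [split; [|split]|].
  - intros a b u v. unfold rodrigues.
    destruct p as [[? ?] ?], u as [[? ?] ?], v as [[? ?] ?]; simpl.
    f_equal; [f_equal|]; ring.
  - intros u v. rewrite dot3_parseval, !rodrigues_dot_p, !rodrigues_dot_w, !rodrigues_dot_n.
    rewrite (dot3_parseval u v).
    transitivity (dot3 u p * dot3 v p
                  + (c ^ 2 + s ^ 2) * (dot3 u w * dot3 v w + dot3 u n * dot3 v n)); [ring|].
    rewrite Hcs. ring.
  - destruct Hpw as [Hp _]. unfold on_sphere in Hp.
    transitivity ((c + (1 - c) * dot3 p p) * (c * c + s * s * dot3 p p)).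
    + destruct p as [[? ?] ?]; unfold triple3, rodrigues; simpl; ring.
    + rewrite Hp. nra.
  - destruct Hpw as [Hp [_ Hpw0]].
    apply eq_of_frame_coords;
      rewrite ?rodrigues_dot_p, ?rodrigues_dot_w, ?rodrigues_dot_n, ?Hpw0, ?(dot3_comm p n),
        ?cross3_dot_l; ring.
Qed.

End Frame.

Lemma great_circle_frame p gam :
  unit_speed_great_circle gam -> gam 0 = p ->
  exists w, orthonormal_pair p w /\ forall s, gam s = frame_vec p w (cos s) (sin s) 0.
Proof.
  intros [c [w [Hc [Hw [Hcw Hg]]]]] H0.
  assert (c = p).
  { rewrite <- H0, Hg, cos_0, sin_0.
    destruct c as [[? ?] ?], w as [[? ?] ?]. simpl. f_equal; [f_equal|]; ring. }
  subst c. exists w. split; [split; auto|].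
  intros s. rewrite Hg. unfold frame_vec.
  destruct p as [[? ?] ?], w as [[? ?] ?]. simpl. f_equal; [f_equal|]; ring.
Qed.

Lemma is_lim_seq_comp_continuous (f : R -> R) (un : nat -> R) u :
  continuous f u -> is_lim_seq un u -> is_lim_seq (fun n => f (un n)) (f u).
Proof. intros Hf H. apply is_lim_seq_continuous; [apply continuity_pt_filterlim, Hf | exact H]. Qed.

Lemma is_lim_seq_eq (un : nat -> R) (a b : R) : is_lim_seq un a -> is_lim_seq un b -> a = b.
Proof.
  intros Ha Hb. apply is_lim_seq_unique in Ha, Hb. rewrite Ha in Hb. injection Hb. auto.
Qed.

Lemma is_lim_seq_0_of_sq_le (d D : nat -> R) :
  (forall n, d n ^ 2 <= D n) -> is_lim_seq D 0 -> is_lim_seq d 0.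
Proof.
  intros Hle HD.
  assert (Hs : is_lim_seq (fun n => sqrt (D n)) 0).
  { rewrite <- sqrt_0. apply is_lim_seq_continuous; [apply continuity_pt_sqrt; lra | exact HD]. }
  apply is_lim_seq_le_le with (fun n => - sqrt (D n)) (fun n => sqrt (D n)).
  - intros n. assert (H : Rabs (d n) <= sqrt (D n)).
    { rewrite <- sqrt_Rsqr_abs. apply sqrt_le_1_alt. unfold Rsqr. specialize (Hle n). simpl in Hle. lra. }
    apply Rabs_le_between in H. lra.
  - apply is_lim_seq_opp in Hs. simpl in Hs. rewrite Ropp_0 in Hs. exact Hs.
  - exact Hs.
Qed.

Lemma dot4_sub4_self x l : dot4 (sub4 x l) (sub4 x l) =
  (coord4 0 x - coord4 0 l) ^ 2 + (coord4 1 x - coord4 1 l) ^ 2 +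
  (coord4 2 x - coord4 2 l) ^ 2 + (coord4 3 x - coord4 3 l) ^ 2.
Proof. destruct x as [[[? ?] ?] ?], l as [[[? ?] ?] ?]; unfold dot4, sub4; simpl; ring. Qed.

Lemma coord4_sub_sq_le i x l : (coord4 i x - coord4 i l) ^ 2 <= dot4 (sub4 x l) (sub4 x l).
Proof.
  rewrite dot4_sub4_self.
  pose proof (pow2_ge_0 (coord4 0 x - coord4 0 l)). pose proof (pow2_ge_0 (coord4 1 x - coord4 1 l)).
  pose proof (pow2_ge_0 (coord4 2 x - coord4 2 l)). pose proof (pow2_ge_0 (coord4 3 x - coord4 3 l)).
  destruct i as [|[|[|i]]]; try lra.
  destruct x as [[[? ?] ?] ?], l as [[[? ?] ?] ?]. simpl in *. lra.
Qed.

Lemma seq_cv4_coord x l i : seq_cv4 x l -> is_lim_seq (fun n => coord4 i (x n)) (coord4 i l).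
Proof.
  intros H.
  assert (Hd : is_lim_seq (fun n => coord4 i (x n) - coord4 i l) 0)
    by exact (is_lim_seq_0_of_sq_le _ _ (fun n => coord4_sub_sq_le i (x n) l) H).
  apply is_lim_seq_ext with (fun n => (coord4 i (x n) - coord4 i l) + coord4 i l); [intros; ring|].
  replace (Finite (coord4 i l)) with (Rbar_plus 0 (coord4 i l)) by (simpl; f_equal; ring).
  apply is_lim_seq_plus'; [exact Hd | apply is_lim_seq_const].
Qed.

Lemma seq_cv4_of_coords x l :
  (forall i, (i < 4)%nat -> is_lim_seq (fun n => coord4 i (x n)) (coord4 i l)) -> seq_cv4 x l.
Proof.
  intros H. unfold seq_cv4.
  apply is_lim_seq_ext with (fun n => (coord4 0 (x n) - coord4 0 l) ^ 2 + (coord4 1 (x n) - coord4 1 l) ^ 2 +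
    (coord4 2 (x n) - coord4 2 l) ^ 2 + (coord4 3 (x n) - coord4 3 l) ^ 2).
  { intros; rewrite dot4_sub4_self; reflexivity. }
  assert (Hi : forall i, (i < 4)%nat -> is_lim_seq (fun n => (coord4 i (x n) - coord4 i l) ^ 2) 0).
  { intros i Hi.
    apply is_lim_seq_ext with (fun n => (coord4 i (x n) - coord4 i l) * (coord4 i (x n) - coord4 i l));
      [intros; ring|].
    replace 0 with ((coord4 i l - coord4 i l) * (coord4 i l - coord4 i l)) by ring.
    apply is_lim_seq_mult'; apply is_lim_seq_minus'; auto; apply is_lim_seq_const. }
  replace 0 with (0 + 0 + 0 + 0) by ring.
  repeat apply is_lim_seq_plus'; apply Hi; lia.
Qed.

Lemma seq_cv4_dot3 x l v : seq_cv4 x l -> is_lim_seq (fun n => dot3 (fst (x n)) v) (dot3 (fst l) v).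
Proof.
  intros H.
  assert (Hc : forall y, dot3 (fst y) v
                        = coord4 0 y * fst (fst v) + coord4 1 y * snd (fst v) + coord4 2 y * snd v)
    by (intros [[[? ?] ?] ?]; destruct v as [[? ?] ?]; simpl; ring).
  rewrite Hc. apply is_lim_seq_ext with (fun n => coord4 0 (x n) * fst (fst v)
    + coord4 1 (x n) * snd (fst v) + coord4 2 (x n) * snd v); [intros; symmetry; apply Hc|].
  repeat apply is_lim_seq_plus';
    (apply is_lim_seq_mult'; [apply seq_cv4_coord, H | apply is_lim_seq_const]).
Qed.

Lemma seq_cv4_snd x l : seq_cv4 x l -> is_lim_seq (fun n => snd (x n)) (snd l).
Proof.
  intros H. destruct l as [l3 l4].
  apply is_lim_seq_ext with (fun n => coord4 3 (x n)); [intros n; destruct (x n) as [[[? ?] ?] ?]; reflexivity|].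
  destruct l3 as [[? ?] ?]. apply (seq_cv4_coord _ _ 3 H).
Qed.

Lemma is_lim_seq_of_tanh (un : nat -> R) u :
  is_lim_seq (fun n => tanh (un n)) (tanh u) -> is_lim_seq un u.
Proof.
  intros H. apply is_lim_seq_ext with (fun n => artanh (tanh (un n))); [intros; apply artanh_tanh|].
  rewrite <- (artanh_tanh u).
  apply is_lim_seq_comp_continuous; [apply continuous_artanh, tanh_bound | exact H].
Qed.

Lemma gd_lncosh_graph r t :
  (exists s, gd s = r /\ lncosh s = t) <-> (- (PI / 2) < r < PI / 2 /\ t = - ln (cos r)).
Proof.
  split.
  - intros [s [<- <-]]. split; [apply gd_bound | rewrite cos_gd, lncosh_eq_opp_ln_sech; reflexivity].
  - intros [Hr ->]. set (y := (PI / 2 - r) / 2).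
    assert (Htan : 0 < tan y) by (unfold tan; apply Rdiv_lt_0_compat; [apply sin_gt_0 | apply cos_gt_0]; unfold y; lra).
    assert (Hgd : gd (- ln (tan y)) = r).
    { unfold gd. rewrite Ropp_involutive, exp_ln, atan_tan by (assumption || unfold y; lra).
      unfold y; field. }
    exists (- ln (tan y)). split; [exact Hgd|].
    rewrite <- Hgd, cos_gd, lncosh_eq_opp_ln_sech. reflexivity.
Qed.

Lemma gd_lncosh_unit_speed s :
  ex_derive gd s /\ ex_derive lncosh s /\ (Derive gd s) ^ 2 + (Derive lncosh s) ^ 2 = 1.
Proof.
  split; [eexists; apply is_derive_gd|]. split; [eexists; apply is_derive_lncosh|].
  rewrite Derive_gd, (is_derive_unique _ _ _ (is_derive_lncosh s)).
  pose proof (tanh_sq_add_sech_sq s). lra.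
Qed.

Lemma lncosh_unbounded M : exists s, M < Rabs (lncosh s).
Proof.
  assert (Hln2 : 0 < ln 2) by (rewrite <- ln_1; apply ln_increasing; lra).
  set (s := Rabs M + ln 2 + 1). exists s.
  pose proof (lncosh_ge_abs s). pose proof (Rle_abs (lncosh s)). pose proof (Rle_abs M).
  assert (Rabs s = s) by (apply Rabs_pos_eq; unfold s; pose proof (Rabs_pos M); lra).
  unfold s in *. lra.
Qed.

Lemma lncosh_even s : lncosh (- s) = lncosh s.
Proof. unfold lncosh, cosh. rewrite Ropp_involutive. f_equal. field. Qed.

Section ProfileCurve.

Variables (p w : V3) (gam : R -> V3).
Hypothesis Hpw : orthonormal_pair p w.
Hypothesis Hgam : forall s, gam s = frame_vec p w (cos s) (sin s) 0.

Lemma gam_dot_w s : dot3 (gam s) w = sin s.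
Proof. rewrite Hgam. apply frame_vec_dot_w, Hpw. Qed.

Lemma profile_curve_inj s s' :
  cyl_curve gam gd lncosh s = cyl_curve gam gd lncosh s' -> s = s'.
Proof.
  unfold cyl_curve. intros H. injection H. intros _ Hg.
  apply tanh_inj. rewrite <- !sin_gd, <- !gam_dot_w, Hg. reflexivity.
Qed.

Lemma profile_curve_proper (sn : nat -> R) s :
  seq_cv4 (fun n => cyl_curve gam gd lncosh (sn n)) (cyl_curve gam gd lncosh s) ->
  is_lim_seq sn s.
Proof.
  intros H. apply (seq_cv4_dot3 _ _ w) in H. unfold cyl_curve in H. simpl in H.
  apply is_lim_seq_of_tanh. rewrite <- sin_gd, <- gam_dot_w.
  apply is_lim_seq_ext with (fun n => dot3 (gam (gd (sn n))) w); [|exact H].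
  intros n. rewrite gam_dot_w. apply sin_gd.
Qed.

End ProfileCurve.

(** * The surface as a graph over the open hemisphere *)

Definition hemisphere_graph (p : V3) (x : P4) :=
  on_sphere (fst x) /\ 0 < dot3 (fst x) p /\ snd x = - ln (dot3 (fst x) p).

Lemma exists_sech_tanh a b : 0 < a -> a ^ 2 + b ^ 2 = 1 -> exists s, sech s = a /\ tanh s = b.
Proof.
  intros Ha Hab. exists (artanh b).
  assert (Htb : tanh (artanh b) = b) by (apply tanh_artanh; nra).
  split; [|exact Htb].
  rewrite sech_eq_sqrt, Htb, <- (sqrt_pow2 a) by lra. f_equal. lra.
Qed.

Lemma exists_cos_sin_scaling b c :
  exists C S, C ^ 2 + S ^ 2 = 1 /\ C * sqrt (b ^ 2 + c ^ 2) = b /\ S * sqrt (b ^ 2 + c ^ 2) = c.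
Proof.
  set (r := sqrt (b ^ 2 + c ^ 2)).
  assert (Hr2 : r * r = b ^ 2 + c ^ 2) by (apply sqrt_sqrt; nra).
  destruct (Req_dec r 0) as [Hr | Hr].
  - exists 1, 0. rewrite Hr in *. repeat split; nra.
  - exists (b / r), (c / r). repeat split; field_simplify; auto.
    replace (r ^ 2) with (r * r) by ring. rewrite Hr2. field. intros H. apply Hr.
    rewrite <- sqrt_0. unfold r. f_equal. exact H.
Qed.

Definition chart (p w : V3) (u v : R) : P4 :=
  (frame_vec p w (sech u * sech v) (tanh u) (sech u * tanh v), lncosh u + lncosh v).

Lemma coord4_frame_vec p w a b c t i : (i < 3)%nat ->
  coord4 i (frame_vec p w a b c, t)
  = a * coord4 i (p, 0) + b * coord4 i (w, 0) + c * coord4 i (cross3 p w, 0).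
Proof.
  intros Hi. unfold frame_vec. destruct p as [[? ?] ?], w as [[? ?] ?].
  destruct i as [|[|[|i]]]; simpl; try ring. lia.
Qed.

Lemma coord4_3 (q : V3) t : coord4 3 (q, t) = t.
Proof. destruct q as [[? ?] ?]. reflexivity. Qed.

Section Surface.

Variables (p w : V3) (gam : R -> V3).
Hypothesis Hpw : orthonormal_pair p w.
Hypothesis Hgam : forall s, gam s = frame_vec p w (cos s) (sin s) 0.

Local Notation n := (cross3 p w).

Lemma rotational_surface_hemisphere_graph x :
  rotational_surface p gam gd lncosh x -> hemisphere_graph p x.
Proof.
  intros [f [s [Hf ->]]]. unfold hemisphere_graph; simpl.
  rewrite (rotation_fixing_dot_axis p f _ Hf), Hgam, frame_vec_dot_p, cos_gd by exact Hpw.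
  split; [|split; [apply sech_pos | apply lncosh_eq_opp_ln_sech]].
  unfold on_sphere. rewrite (rotation_fixing_dot p f _ _ Hf), frame_vec_dot by exact Hpw.
  rewrite <- cos_gd. pose proof (sin2_cos2 (gd s)). unfold Rsqr in H. lra.
Qed.

(* Choose the profile parameter [s] from the height over [p], then rotate [gam (gd s)]
   about [p] onto [q]. *)
Lemma hemisphere_graph_rotational_surface x :
  hemisphere_graph p x -> rotational_surface p gam gd lncosh x.
Proof.
  intros [Hs [Ha Ht]]. destruct x as [q t]. simpl in *.
  set (a := dot3 q p) in *. set (b := dot3 q w). set (c := dot3 q n).
  assert (Habc : a ^ 2 + b ^ 2 + c ^ 2 = 1).
  { unfold on_sphere in Hs. rewrite (dot3_parseval p w Hpw q q) in Hs. fold a b c in Hs. lra. }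
  set (r := sqrt (b ^ 2 + c ^ 2)).
  assert (Hr2 : r ^ 2 = b ^ 2 + c ^ 2) by (apply pow2_sqrt; nra).
  destruct (exists_sech_tanh a r Ha ltac:(lra)) as [s [Hsa Hsr]].
  destruct (exists_cos_sin_scaling b c) as [C [S [HCS [HC HS]]]]. fold r in HC, HS.
  exists (rodrigues p C S), s. split; [apply (rodrigues_rotation_fixing p w Hpw), HCS|].
  f_equal; [|rewrite Ht, <- Hsa; symmetry; apply lncosh_eq_opp_ln_sech].
  apply (eq_of_frame_coords p w Hpw);
    rewrite ?(rodrigues_dot_p p w Hpw), ?rodrigues_dot_w, ?rodrigues_dot_n, Hgam,
      ?frame_vec_dot_p, ?frame_vec_dot_w, ?frame_vec_dot_n, ?cos_gd, ?sin_gd, ?Hsa, ?Hsr by exact Hpw;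
    fold a b c; lra.
Qed.

Lemma rotational_surface_eq : rotational_surface p gam gd lncosh = hemisphere_graph p.
Proof.
  apply functional_extensionality. intros x. apply propositional_extensionality. split.
  - apply rotational_surface_hemisphere_graph.
  - apply hemisphere_graph_rotational_surface.
Qed.

Lemma hemisphere_graph_closed : closed4 (hemisphere_graph p).
Proof.
  intros x l Hx Hl.
  assert (Ha := seq_cv4_dot3 x l p Hl). assert (Hb := seq_cv4_dot3 x l w Hl).
  assert (Hc := seq_cv4_dot3 x l n Hl).
  assert (He : is_lim_seq (fun k => dot3 (fst (x k)) p) (exp (- snd l))).
  { apply is_lim_seq_ext with (fun k => exp (- snd (x k))).
    - intros k. destruct (Hx k) as [_ [H1 H2]]. rewrite H2, Ropp_involutive, exp_ln; auto.
    - apply (is_lim_seq_comp_continuous (fun t => exp (- t))); [|apply seq_cv4_snd, Hl].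
      apply (ex_derive_continuous (fun t => exp (- t))). auto_derive. exact I. }
  assert (Hae : dot3 (fst l) p = exp (- snd l)) by exact (is_lim_seq_eq _ _ _ Ha He).
  split; [|split; [rewrite Hae; apply exp_pos | rewrite Hae, ln_exp; ring]].
  unfold on_sphere. rewrite (dot3_parseval p w Hpw).
  apply (is_lim_seq_eq (fun k => dot3 (fst (x k)) p * dot3 (fst (x k)) p
    + dot3 (fst (x k)) w * dot3 (fst (x k)) w + dot3 (fst (x k)) n * dot3 (fst (x k)) n)).
  - repeat apply is_lim_seq_plus'; apply is_lim_seq_mult'; assumption.
  - apply is_lim_seq_ext with (fun _ => 1); [|apply is_lim_seq_const].
    intros k. destruct (Hx k) as [Hs _]. unfold on_sphere in Hs.
    rewrite (dot3_parseval p w Hpw) in Hs. symmetry. exact Hs.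
Qed.

Lemma chart_dot_p u v : dot3 (fst (chart p w u v)) p = sech u * sech v.
Proof. apply frame_vec_dot_p, Hpw. Qed.

Lemma chart_dot_w u v : dot3 (fst (chart p w u v)) w = tanh u.
Proof. apply frame_vec_dot_w, Hpw. Qed.

Lemma chart_dot_n u v : dot3 (fst (chart p w u v)) n = sech u * tanh v.
Proof. apply frame_vec_dot_n, Hpw. Qed.

Lemma chart_hemisphere_graph u v : hemisphere_graph p (chart p w u v).
Proof.
  pose proof (sech_pos u). pose proof (sech_pos v).
  unfold hemisphere_graph. rewrite chart_dot_p. split; [|split].
  - unfold on_sphere, chart; simpl. rewrite frame_vec_dot by exact Hpw.
    transitivity (sech u ^ 2 * (tanh v ^ 2 + sech v ^ 2) + tanh u ^ 2); [ring|].
    rewrite tanh_sq_add_sech_sq. pose proof (tanh_sq_add_sech_sq u). lra.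
  - apply Rmult_lt_0_compat; assumption.
  - simpl. rewrite ln_mult, !lncosh_eq_opp_ln_sech by assumption. ring.
Qed.

Lemma hemisphere_graph_chart x : hemisphere_graph p x -> exists u v, x = chart p w u v.
Proof.
  intros [Hs [Ha Ht]]. destruct x as [q t]. simpl in *.
  set (a := dot3 q p) in *. set (b := dot3 q w). set (c := dot3 q n).
  assert (Habc : a ^ 2 + b ^ 2 + c ^ 2 = 1).
  { unfold on_sphere in Hs. rewrite (dot3_parseval p w Hpw q q) in Hs. fold a b c in Hs. lra. }
  set (m := sqrt (a ^ 2 + c ^ 2)).
  assert (Hm : 0 < m) by (apply sqrt_lt_R0; nra).
  assert (Hm2 : m ^ 2 = a ^ 2 + c ^ 2) by (apply pow2_sqrt; nra).
  destruct (exists_sech_tanh m b Hm ltac:(lra)) as [u [Hu1 Hu2]].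
  destruct (exists_sech_tanh (a / m) (c / m)) as [v [Hv1 Hv2]].
  { apply Rdiv_lt_0_compat; assumption. }
  { replace ((a / m) ^ 2 + (c / m) ^ 2) with ((a ^ 2 + c ^ 2) / m ^ 2) by (field; lra).
    rewrite <- Hm2. field. lra. }
  exists u, v. unfold chart. f_equal.
  - rewrite (frame_vec_coords p w Hpw q) at 1. fold a b c.
    rewrite Hu1, Hu2, Hv1, Hv2. f_equal; field; lra.
  - rewrite Ht, !lncosh_eq_opp_ln_sech, <- Ropp_plus_distr, <- ln_mult by apply sech_pos.
    rewrite Hu1, Hv1. f_equal. f_equal. field. lra.
Qed.

Lemma chart_inj u v u' v' : chart p w u v = chart p w u' v' -> u = u' /\ v = v'.
Proof.
  intros H.
  assert (Hu : u = u') by (apply tanh_inj; rewrite <- (chart_dot_w u v), <- (chart_dot_w u' v'), H; reflexivity).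
  subst u'. split; [reflexivity|].
  apply tanh_inj, (Rmult_eq_reg_l (sech u)); [|apply Rgt_not_eq, sech_pos].
  rewrite <- chart_dot_n, <- (chart_dot_n u v'), H. reflexivity.
Qed.

Lemma chart_continuous un vn (u v : R) :
  is_lim_seq un u -> is_lim_seq vn v -> seq_cv4 (fun k => chart p w (un k) (vn k)) (chart p w u v).
Proof.
  intros Hu Hv. apply seq_cv4_of_coords. intros i Hi.
  assert (Su := is_lim_seq_comp_continuous sech un u (continuous_sech u) Hu).
  assert (Sv := is_lim_seq_comp_continuous sech vn v (continuous_sech v) Hv).
  assert (Tu := is_lim_seq_comp_continuous tanh un u (continuous_tanh u) Hu).
  assert (Tv := is_lim_seq_comp_continuous tanh vn v (continuous_tanh v) Hv).
  assert (Lu := is_lim_seq_comp_continuous lncosh un u (continuous_lncosh u) Hu).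
  assert (Lv := is_lim_seq_comp_continuous lncosh vn v (continuous_lncosh v) Hv).
  unfold chart. destruct (Nat.lt_ge_cases i 3) as [H3|H3].
  - apply is_lim_seq_ext with (fun k => sech (un k) * sech (vn k) * coord4 i (p, 0)
      + tanh (un k) * coord4 i (w, 0) + sech (un k) * tanh (vn k) * coord4 i (n, 0)).
    { intros; symmetry; apply (coord4_frame_vec p w), H3. }
    rewrite (coord4_frame_vec p w) by exact H3.
    apply is_lim_seq_plus'; [apply is_lim_seq_plus'|];
      apply is_lim_seq_mult'; try apply is_lim_seq_const; try assumption;
      apply is_lim_seq_mult'; assumption.
  - replace i with 3%nat by lia. rewrite coord4_3.
    apply is_lim_seq_ext with (fun k => lncosh (un k) + lncosh (vn k)); [intros; symmetry; apply coord4_3|].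
    apply is_lim_seq_plus'; assumption.
Qed.

Lemma chart_continuous_inv un vn (u v : R) :
  seq_cv4 (fun k => chart p w (un k) (vn k)) (chart p w u v) -> is_lim_seq un u /\ is_lim_seq vn v.
Proof.
  intros H.
  assert (Hw := seq_cv4_dot3 _ _ w H). assert (Hn := seq_cv4_dot3 _ _ n H).
  rewrite chart_dot_w in Hw. rewrite chart_dot_n in Hn.
  assert (Hu : is_lim_seq un u).
  { apply is_lim_seq_of_tanh. apply is_lim_seq_ext with (2 := Hw). intros; apply chart_dot_w. }
  split; [exact Hu|].
  assert (Su := is_lim_seq_comp_continuous sech un u (continuous_sech u) Hu).
  assert (Hn' : is_lim_seq (fun k => sech (un k) * tanh (vn k)) (sech u * tanh v))
    by (apply is_lim_seq_ext with (2 := Hn); intros; apply chart_dot_n).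
  assert (Hd := is_lim_seq_div' _ _ _ _ Hn' Su (Rgt_not_eq _ _ (sech_pos u))).
  apply is_lim_seq_of_tanh.
  replace (tanh v) with (sech u * tanh v / sech u) by (pose proof (sech_pos u); field; lra).
  apply is_lim_seq_ext with (2 := Hd). intros k. pose proof (sech_pos (un k)). field. lra.
Qed.

Lemma chart_homeo : homeo_onto (chart p w) (hemisphere_graph p).
Proof.
  split; [|split; [|split]].
  - intros x. split; [apply hemisphere_graph_chart | intros [u [v ->]]; apply chart_hemisphere_graph].
  - apply chart_inj.
  - apply chart_continuous.
  - apply chart_continuous_inv.
Qed.

End Surface.

(** * Differential geometry of the chart *)

Lemma is_derive_const_R (k x : R) : is_derive (fun _ => k) x 0.
Proof. apply (is_derive_const (K := R_AbsRing) (V := R_NormedModule)). Qed.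

Lemma is_derive_mult_const_r (f : R -> R) k x l :
  is_derive f x l -> is_derive (fun r => f r * k) x (l * k).
Proof.
  intros H. eapply is_derive_eq.
  - apply (is_derive_mult f (fun _ => k)); [exact H | apply is_derive_const | intros; apply Rmult_comm].
  - unfold_R_ops. ring.
Qed.

Lemma is_derive_mult_const_l (f : R -> R) k x l :
  is_derive f x l -> is_derive (fun r => k * f r) x (k * l).
Proof.
  intros H. eapply is_derive_ext; [intros; apply Rmult_comm|].
  rewrite Rmult_comm. apply is_derive_mult_const_r, H.
Qed.

Lemma dvec_frame_vec p w (A B C T : R -> R) s a b c t :
  is_derive A s a -> is_derive B s b -> is_derive C s c -> is_derive T s t ->
  dvec (fun r => (frame_vec p w (A r) (B r) (C r), T r)) s = (frame_vec p w a b c, t).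
Proof.
  intros HA HB HC HT.
  assert (Hlin : forall k1 k2 k3, Derive (fun r => A r * k1 + B r * k2 + C r * k3) s
                                  = a * k1 + b * k2 + c * k3).
  { intros. apply is_derive_unique.
    apply (is_derive_plus (fun r => A r * k1 + B r * k2)); [apply (is_derive_plus (fun r => A r * k1))|];
      apply is_derive_mult_const_r; assumption. }
  unfold dvec, frame_vec. destruct p as [[p1 p2] p3], w as [[w1 w2] w3]. simpl.
  rewrite !Hlin. f_equal. apply is_derive_unique, HT.
Qed.

Lemma dvec_ext (f g : R -> P4) s : (forall r, f r = g r) -> dvec f s = dvec g s.
Proof. intros H. apply functional_extensionality in H. subst. reflexivity. Qed.

Definition dsech r := - sech r * tanh r.
Definition d2sech r := sech r * tanh r ^ 2 - sech r ^ 3.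

Lemma is_derive_dsech r : is_derive dsech r (d2sech r).
Proof.
  eapply is_derive_eq.
  - apply (is_derive_mult (fun r => - sech r) tanh);
      [apply (is_derive_opp sech), is_derive_sech | apply is_derive_tanh | intros; apply Rmult_comm].
  - unfold d2sech. unfold_R_ops. ring.
Qed.

Lemma is_derive_sech_sq r : is_derive (fun r => sech r ^ 2) r (- 2 * sech r ^ 2 * tanh r).
Proof.
  eapply is_derive_eq; [apply (is_derive_pow sech 2), is_derive_sech|]. simpl. ring.
Qed.

Lemma is_derive_lncosh_add_const k r : is_derive (fun r => lncosh r + k) r (tanh r).
Proof.
  eapply is_derive_eq; [apply (is_derive_plus lncosh (fun _ => k)); [apply is_derive_lncosh | apply is_derive_const]|].
  unfold_R_ops. ring.
Qed.

Lemma is_derive_const_add_lncosh k r : is_derive (fun r => k + lncosh r) r (tanh r).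
Proof.
  eapply is_derive_ext; [intros; apply Rplus_comm|]. apply is_derive_lncosh_add_const.
Qed.

Section ChartGeometry.

Variables p w : V3.
Hypothesis Hpw : orthonormal_pair p w.

Lemma Xu_chart u v :
  Xu (chart p w) u v = (frame_vec p w (dsech u * sech v) (sech u ^ 2) (dsech u * tanh v), tanh u).
Proof.
  apply dvec_frame_vec;
    [apply is_derive_mult_const_r, is_derive_sech | apply is_derive_tanh
    | apply is_derive_mult_const_r, is_derive_sech | apply is_derive_lncosh_add_const].
Qed.

Lemma Xv_chart u v :
  Xv (chart p w) u v = (frame_vec p w (sech u * dsech v) 0 (sech u * sech v ^ 2), tanh v).
Proof.
  apply dvec_frame_vec;
    [apply is_derive_mult_const_l, is_derive_sech | apply is_derive_const_R
    | apply is_derive_mult_const_l, is_derive_tanh | apply is_derive_const_add_lncosh].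
Qed.

Lemma Xuu_chart u v : Xuu (chart p w) u v =
  (frame_vec p w (d2sech u * sech v) (- 2 * sech u ^ 2 * tanh u) (d2sech u * tanh v), sech u ^ 2).
Proof.
  unfold Xuu. rewrite (dvec_ext _ _ _ (fun r => Xu_chart r v)).
  apply dvec_frame_vec;
    [apply is_derive_mult_const_r, is_derive_dsech | apply is_derive_sech_sq
    | apply is_derive_mult_const_r, is_derive_dsech | apply is_derive_tanh].
Qed.

Lemma Xuv_chart u v : Xuv (chart p w) u v =
  (frame_vec p w (dsech u * dsech v) 0 (dsech u * sech v ^ 2), 0).
Proof.
  unfold Xuv. rewrite (dvec_ext _ _ _ (fun r => Xu_chart u r)).
  apply dvec_frame_vec;
    [apply is_derive_mult_const_l, is_derive_sech | apply is_derive_const_R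
    | apply is_derive_mult_const_l, is_derive_tanh | apply is_derive_const_R].
Qed.

Lemma Xvv_chart u v : Xvv (chart p w) u v =
  (frame_vec p w (sech u * d2sech v) 0 (sech u * (- 2 * sech v ^ 2 * tanh v)), sech v ^ 2).
Proof.
  unfold Xvv. rewrite (dvec_ext _ _ _ (fun r => Xv_chart u r)).
  apply dvec_frame_vec;
    [apply is_derive_mult_const_l, is_derive_dsech | apply is_derive_const_R
    | apply is_derive_mult_const_l, is_derive_sech_sq | apply is_derive_tanh].
Qed.

Lemma dot4_frame_vec a b c t a' b' c' t' :
  dot4 (frame_vec p w a b c, t) (frame_vec p w a' b' c', t') = a * a' + b * b' + c * c' + t * t'.
Proof. unfold dot4; simpl. rewrite frame_vec_dot by exact Hpw. reflexivity. Qed.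

(* Identities in [sech] and [tanh] become rational identities in [e^-u] and [e^-v]. *)
Ltac hyperbolic_field :=
  unfold dsech, d2sech; rewrite ?sech_exp, ?tanh_exp_opp;
  match goal with |- context [exp (- ?u)] =>
    let x := fresh "x" in pose proof (exp_pos (- u)); set (x := exp (- u)) in * end;
  try match goal with |- context [exp (- ?v)] =>
    let y := fresh "y" in pose proof (exp_pos (- v)); set (y := exp (- v)) in * end;
  field; nra.

(* First fundamental form: [E = 1], [F = tanh u tanh v], [G = sech u^2 sech v^2 + tanh v^2],
   so [EG - F^2 = sech u^2]. *)
Lemma chart_regular : regular_param (chart p w).
Proof.
  intros u v. rewrite Xu_chart, Xv_chart, !dot4_frame_vec.
  replace (_ * _ - _) with (sech u ^ 2) by hyperbolic_field.
  pose proof (sech_pos u). apply Rlt_gt. nra.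
Qed.

(* With [a = <q, p>], the unit normal is [(p - a q, a)] and the shape operator is [a Id]. *)
Lemma chart_totally_umbilic : totally_umbilic_param (chart p w).
Proof.
  intros u v. set (a := sech u * sech v).
  exists (frame_vec p w (1 - a ^ 2) (- (a * tanh u)) (- (a * (sech u * tanh v))), a), a.
  rewrite Xu_chart, Xv_chart, Xuu_chart, Xuv_chart, Xvv_chart, !dot4_frame_vec.
  unfold chart; simpl fst. rewrite frame_vec_dot by exact Hpw.
  unfold a. repeat split; hyperbolic_field.
Qed.

End ChartGeometry.

(** * Completeness *)

Lemma continuous_dsech x : continuous dsech x.
Proof. apply (ex_derive_continuous dsech). eexists. apply is_derive_dsech. Qed.

Ltac continuity_step :=
  match goal with
  | |- continuous (fun y => sqrt (@?f y)) _ => apply (continuous_sqrt_comp f)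
  | |- continuous (fun y => sech (@?f y)) _ => apply (continuous_comp f sech); [|apply continuous_sech]
  | |- continuous (fun y => tanh (@?f y)) _ => apply (continuous_comp f tanh); [|apply continuous_tanh]
  | |- continuous (fun y => dsech (@?f y)) _ => apply (continuous_comp f dsech); [|apply continuous_dsech]
  | |- continuous (fun y => @?f y + @?g y) _ => apply (continuous_plus f g)
  | |- continuous (fun y => @?f y * @?g y) _ => apply (continuous_mult f g)
  | |- continuous (fun y => @?f y ^ 2) _ =>
      apply (continuous_ext (fun y => f y * f y)); [intros; simpl; ring|]
  | |- continuous (fun _ => _) _ => apply continuous_const
  | |- _ => assumption
  end.

Lemma sqrt_dot4_ge_snd (x : P4) : snd x <= sqrt (dot4 x x).
Proof.
  destruct x as [[[x1 x2] x3] x4]. unfold dot4; simpl.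
  eapply Rle_trans; [apply Rle_abs|]. rewrite <- sqrt_Rsqr_abs. apply sqrt_le_1_alt.
  unfold Rsqr. nra.
Qed.

Lemma path_height_unbounded (c1 c2 : R -> R) :
  is_lim (fun r => c1 r ^ 2 + c2 r ^ 2) p_infty p_infty ->
  forall K, exists T, 0 <= T /\ K < lncosh (c1 T) + lncosh (c2 T).
Proof.
  intros Hlim K.
  assert (Hln2 : 0 < ln 2) by (rewrite <- ln_1; apply ln_increasing; lra).
  set (K' := Rabs K + 2 * ln 2 + 1).
  apply is_lim_spec in Hlim. destruct (Hlim (K' ^ 2)) as [N HN].
  set (T := Rmax 0 N + 1). exists T.
  assert (HT : 0 <= T /\ N < T) by (unfold T; pose proof (Rmax_l 0 N); pose proof (Rmax_r 0 N); lra).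
  split; [apply HT|].
  specialize (HN T (proj2 HT)).
  pose proof (lncosh_ge_abs (c1 T)). pose proof (lncosh_ge_abs (c2 T)).
  assert (K' < Rabs (c1 T) + Rabs (c2 T)).
  { rewrite <- (pow2_abs (c1 T)), <- (pow2_abs (c2 T)) in HN.
    pose proof (Rabs_pos (c1 T)). pose proof (Rabs_pos (c2 T)).
    assert (0 <= K') by (unfold K'; pose proof (Rabs_pos K); lra). nra. }
  pose proof (Rle_abs K). unfold K' in *. lra.
Qed.

Section ChartCompleteness.

Variables p w : V3.
Hypothesis Hpw : orthonormal_pair p w.

Definition chart_path_velocity (c1 c2 : R -> R) (a1 a2 r : R) : P4 :=
  (frame_vec p w (dsech (c1 r) * a1 * sech (c2 r) + sech (c1 r) * (dsech (c2 r) * a2))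
                 (sech (c1 r) ^ 2 * a1)
                 (dsech (c1 r) * a1 * tanh (c2 r) + sech (c1 r) * (sech (c2 r) ^ 2 * a2)),
   tanh (c1 r) * a1 + tanh (c2 r) * a2).

Lemma dvec_chart_path (c1 c2 : R -> R) r a1 a2 :
  is_derive c1 r a1 -> is_derive c2 r a2 ->
  dvec (fun s => chart p w (c1 s) (c2 s)) r = chart_path_velocity c1 c2 a1 a2 r.
Proof.
  intros H1 H2. apply dvec_frame_vec.
  - eapply is_derive_eq.
    + apply (is_derive_mult (fun s => sech (c1 s)) (fun s => sech (c2 s)));
        [apply is_derive_comp_R; [apply is_derive_sech | exact H1] | apply is_derive_comp_R; [apply is_derive_sech | exact H2]
        | intros; apply Rmult_comm].
    + unfold dsech. unfold_R_ops. ring.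
  - exact (is_derive_comp_R tanh _ c1 r a1 is_derive_tanh H1).
  - eapply is_derive_eq.
    + apply (is_derive_mult (fun s => sech (c1 s)) (fun s => tanh (c2 s)));
        [apply is_derive_comp_R; [apply is_derive_sech | exact H1] | apply is_derive_comp_R; [apply is_derive_tanh | exact H2]
        | intros; apply Rmult_comm].
    + unfold dsech. unfold_R_ops. ring.
  - apply (is_derive_plus (fun s => lncosh (c1 s)) (fun s => lncosh (c2 s)));
      [exact (is_derive_comp_R lncosh tanh c1 r a1 is_derive_lncosh H1)
      |exact (is_derive_comp_R lncosh tanh c2 r a2 is_derive_lncosh H2)].
Qed.

Lemma continuous_chart_path_velocity (c1 c2 a1 a2 : R -> R) r :
  continuous c1 r -> continuous c2 r -> continuous a1 r -> continuous a2 r ->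
  let V s := chart_path_velocity c1 c2 (a1 s) (a2 s) s in
  continuous (fun s => sqrt (dot4 (V s) (V s))) r /\ continuous (fun s => snd (V s)) r.
Proof.
  intros H1 H2 H3 H4 V. split.
  - apply (continuous_ext (fun s => sqrt (
      (dsech (c1 s) * a1 s * sech (c2 s) + sech (c1 s) * (dsech (c2 s) * a2 s)) ^ 2
      + (sech (c1 s) ^ 2 * a1 s) ^ 2
      + (dsech (c1 s) * a1 s * tanh (c2 s) + sech (c1 s) * (sech (c2 s) ^ 2 * a2 s)) ^ 2
      + (tanh (c1 s) * a1 s + tanh (c2 s) * a2 s) ^ 2))).
    + intros s. unfold V, chart_path_velocity. rewrite dot4_frame_vec by exact Hpw. f_equal. ring.
    + repeat continuity_step.
  - unfold V, chart_path_velocity; simpl. repeat continuity_step.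
Qed.

Section Path.

Variables c1 c2 : R -> R.
Hypothesis Hc : forall r, 0 <= r -> ex_derive c1 r /\ ex_derive c2 r /\
                                   continuous (Derive c1) r /\ continuous (Derive c2) r.

Local Notation V r := (chart_path_velocity c1 c2 (Derive c1 r) (Derive c2 r) r).
Local Notation height r := (lncosh (c1 r) + lncosh (c2 r)).

Lemma chart_path_length_ge_height T : 0 <= T ->
  height T - height 0
  <= RInt (fun r => sqrt (dot4 (dvec (fun s => chart p w (c1 s) (c2 s)) r)
                             (dvec (fun s => chart p w (c1 s) (c2 s)) r))) 0 T.
Proof.
  intros HT0.
  assert (HI : forall x, Rmin 0 T <= x <= Rmax 0 T -> 0 <= x)
    by (intros x Hx; rewrite Rmin_left in Hx by lra; apply Hx).
  assert (Hcont : forall r, 0 <= r ->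
            continuous (fun s => sqrt (dot4 (V s) (V s))) r /\ continuous (fun s => snd (V s)) r).
  { intros r Hr. destruct (Hc r Hr) as [H1 [H2 [H3 H4]]].
    apply continuous_chart_path_velocity;
      (apply (ex_derive_continuous c1) || apply (ex_derive_continuous c2) || idtac); assumption. }
  assert (Hrate : forall x, Rmin 0 T <= x <= Rmax 0 T ->
            is_derive (fun r => height r) x (snd (V x))).
  { intros x Hx. destruct (Hc x (HI x Hx)) as [H1 [H2 _]].
    apply (is_derive_plus (fun s => lncosh (c1 s)) (fun s => lncosh (c2 s)));
      apply is_derive_comp_R;
      [apply is_derive_lncosh | apply Derive_correct, H1 | apply is_derive_lncosh | apply Derive_correct, H2]. }
  rewrite (RInt_ext _ (fun r => sqrt (dot4 (V r) (V r))))
    by (intros x Hx; rewrite Rmin_left in Hx by lra;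
        destruct (Hc x ltac:(lra)) as [H1 [H2 _]];
        rewrite (dvec_chart_path c1 c2 x _ _ (Derive_correct _ _ H1) (Derive_correct _ _ H2));
        reflexivity).
  assert (Hk := is_RInt_unique _ _ _ _
                 (is_RInt_derive _ _ 0 T Hrate (fun x Hx => proj2 (Hcont x (HI x Hx))))).
  replace (height T - height 0) with (RInt (fun s => snd (V s)) 0 T) by (rewrite Hk; reflexivity).
  apply RInt_le; [exact HT0 | | | intros r _; apply sqrt_dot4_ge_snd];
    apply (ex_RInt_continuous (V := R_CompleteNormedModule)); intros x Hx; apply Hcont, HI, Hx.
Qed.

End Path.

Lemma chart_complete : complete_param (chart p w).
Proof.
  intros c1 c2 Hc Hlim M.
  destruct (path_height_unbounded c1 c2 Hlim (M + (lncosh (c1 0) + lncosh (c2 0)))) as [T [HT0 HT]].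
  exists T. split; [exact HT0|].
  pose proof (chart_path_length_ge_height c1 c2 Hc T HT0). lra.
Qed.

End ChartCompleteness.

(** * Real analyticity *)

Lemma is_lim_seq_bounded (u : nat -> R) (l : R) :
  is_lim_seq u l -> exists M, forall n, Rabs (u n) <= M.
Proof.
  intros H. apply is_lim_seq_abs, is_lim_seq_Reals in H.
  destruct (cauchy_bound _ (CV_Cauchy _ (exist _ _ H))) as [M HM].
  exists M. intros n. apply HM. exists n. reflexivity.
Qed.

Lemma CV_radius_ge_of_ex_pseries c r :
  (forall y, 0 <= y < r -> ex_pseries c y) -> Rbar_le r (CV_radius c).
Proof.
  intros H. apply Rbar_not_lt_le. intros Hlt.
  pose proof (CV_radius_ge_0 c).
  destruct (CV_radius c) as [R0| |] eqn:E; simpl in *; try tauto.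
  set (y := (R0 + r) / 2).
  apply (CV_disk_outside c y); [rewrite E, Rabs_pos_eq; simpl; unfold y; lra|].
  apply (is_lim_seq_ext (fun n => scal (pow_n y n) (c n))).
  - intros n. rewrite pow_n_pow. unfold_R_ops. ring.
  - apply ex_series_lim_0, H. unfold y. lra.
Qed.

Lemma Rbar_lt_CV_radius a (r y : R) :
  Rbar_le r (CV_radius a) -> Rabs y < r -> Rbar_lt (Rabs y) (CV_radius a).
Proof. intros H1 H2. eapply Rbar_lt_le_trans; [|exact H1]. exact H2. Qed.

Lemma PSeries_as_Series a x : PSeries a x = Series (fun n => a n * x ^ n).
Proof. apply Series_ext. intros n. unfold_R_ops. rewrite <- pow_n_pow. ring. Qed.

Definition analytic1 (f : R -> R) := forall x0, exists (a : nat -> R) (r : R),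
  0 < r /\ Rbar_le r (CV_radius a) /\ forall x, Rabs (x - x0) < r -> f x = PSeries a (x - x0).

Lemma analytic1_ext f g : (forall x, f x = g x) -> analytic1 f -> analytic1 g.
Proof.
  intros E H x0. destruct (H x0) as [a [r [Hr [Hc Hf]]]]. exists a, r.
  repeat split; [exact Hr | exact Hc|]. intros x Hx. rewrite <- E. auto.
Qed.

Definition ps_const (c : R) (n : nat) : R := match n with O => c | _ => 0 end.

Lemma is_pseries_ps_const c y : is_pseries (ps_const c) y c.
Proof.
  change (is_lim_seq (sum_n (fun n => scal (pow_n y n) (ps_const c n))) c).
  apply (is_lim_seq_ext (fun _ => c)); [|apply is_lim_seq_const].
  intros n. induction n as [|n IH]; [rewrite sum_O; simpl; unfold_R_ops; ring|].
  rewrite sum_Sn, <- IH. unfold_R_ops. ring.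
Qed.

Lemma PSeries_ps_const c y : PSeries (ps_const c) y = c.
Proof. apply is_pseries_unique, is_pseries_ps_const. Qed.

Lemma ex_pseries_ps_const c y : ex_pseries (ps_const c) y.
Proof. eexists. apply is_pseries_ps_const. Qed.

Lemma analytic1_const c : analytic1 (fun _ => c).
Proof.
  intros x0. exists (ps_const c), 1. split; [lra|]. split.
  - apply CV_radius_ge_of_ex_pseries. intros; apply ex_pseries_ps_const.
  - intros. symmetry. apply PSeries_ps_const.
Qed.

Lemma analytic1_plus f g : analytic1 f -> analytic1 g -> analytic1 (fun x => f x + g x).
Proof.
  intros Hf Hg x0. destruct (Hf x0) as [a [r1 [Hr1 [Hc1 Hf1]]]]. destruct (Hg x0) as [b [r2 [Hr2 [Hc2 Hg2]]]].
  pose proof (Rmin_l r1 r2). pose proof (Rmin_r r1 r2).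
  exists (PS_plus a b), (Rmin r1 r2). split; [apply Rmin_glb_lt; assumption|]. split.
  - apply CV_radius_ge_of_ex_pseries. intros y Hy.
    apply ex_pseries_plus; apply CV_radius_inside;
      [apply (Rbar_lt_CV_radius a r1) | apply (Rbar_lt_CV_radius b r2)]; try assumption;
      rewrite Rabs_pos_eq; lra.
  - intros x Hx. rewrite PSeries_plus, Hf1, Hg2 by (lra || apply CV_radius_inside;
      first [apply (Rbar_lt_CV_radius a r1) | apply (Rbar_lt_CV_radius b r2)]; (assumption || lra)).
    reflexivity.
Qed.

Lemma analytic1_mult f g : analytic1 f -> analytic1 g -> analytic1 (fun x => f x * g x).
Proof.
  intros Hf Hg x0. destruct (Hf x0) as [a [r1 [Hr1 [Hc1 Hf1]]]]. destruct (Hg x0) as [b [r2 [Hr2 [Hc2 Hg2]]]].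
  pose proof (Rmin_l r1 r2). pose proof (Rmin_r r1 r2).
  exists (PS_mult a b), (Rmin r1 r2). split; [apply Rmin_glb_lt; assumption|]. split.
  - apply CV_radius_ge_of_ex_pseries. intros y Hy.
    apply ex_pseries_mult;
      [apply (Rbar_lt_CV_radius a r1) | apply (Rbar_lt_CV_radius b r2)]; try assumption;
      rewrite Rabs_pos_eq; lra.
  - intros x Hx. rewrite PSeries_mult, Hf1, Hg2 by (lra ||
      first [apply (Rbar_lt_CV_radius a r1) | apply (Rbar_lt_CV_radius b r2)]; (assumption || lra)).
    reflexivity.
Qed.

Lemma analytic1_scaled_exp c k : c <> 0 -> k <> 0 -> analytic1 (fun x => c * exp (k * x)).
Proof.
  intros Hc Hk x0.
  set (a := fun n => c * exp (k * x0) * k ^ n / INR (Factorial.fact n)).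
  assert (Ha : forall n, a n <> 0).
  { intros n. pose proof (exp_pos (k * x0)). pose proof (pow_nonzero k n Hk).
    pose proof (INR_fact_neq_0 n). unfold a, Rdiv.
    repeat apply Rmult_integral_contrapositive_currified; auto; [lra | apply Rinv_neq_0_compat; auto]. }
  exists a, 1. split; [lra|]. split.
  - replace (CV_radius a) with p_infty; [exact I|]. symmetry.
    apply CV_radius_infinite_DAlembert; [exact Ha|].
    apply is_lim_seq_ext with (fun n => Rabs k / INR (S n)).
    + intros n. unfold a. rewrite fact_simpl, mult_INR. simpl pow.
      pose proof (exp_pos (k * x0)). pose proof (pow_nonzero k n Hk).
      pose proof (INR_fact_neq_0 n). pose proof (pos_INR n).
      replace (c * exp (k * x0) * (k * k ^ n) / (INR (S n) * INR (Factorial.fact n))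
               / (c * exp (k * x0) * k ^ n / INR (Factorial.fact n)))
        with (k / INR (S n)) by (rewrite S_INR; field; repeat split; lra).
      rewrite Rabs_div, (Rabs_pos_eq (INR (S n))) by (rewrite S_INR; lra). reflexivity.
    + replace 0 with (Rabs k * 0) by ring.
      apply (is_lim_seq_scal_l (fun n => / INR (S n)) (Rabs k) 0).
      apply (is_lim_seq_incr_1 (fun n => / INR n)).
      replace (Finite 0) with (Rbar_inv p_infty) by reflexivity.
      apply is_lim_seq_inv; [apply is_lim_seq_INR | simpl; congruence].
  - intros x _. rewrite PSeries_as_Series.
    replace (k * x) with (k * x0 + k * (x - x0)) by ring.
    rewrite exp_plus, (exp_Reals (k * (x - x0))), PSeries_as_Series.
    rewrite <- Rmult_assoc, <- Series_scal_l. apply Series_ext. intros n. unfold a.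
    rewrite Rpow_mult_distr. field. apply INR_fact_neq_0.
Qed.

Lemma analytic1_cosh : analytic1 cosh.
Proof.
  apply analytic1_ext with (fun x => / 2 * exp (1 * x) + / 2 * exp (-1 * x)).
  - intros x. unfold cosh. rewrite Rmult_1_l. replace (-1 * x) with (- x) by ring. field.
  - apply analytic1_plus; apply analytic1_scaled_exp; lra.
Qed.

Lemma analytic1_sinh : analytic1 sinh.
Proof.
  apply analytic1_ext with (fun x => / 2 * exp (1 * x) + - / 2 * exp (-1 * x)).
  - intros x. unfold sinh. rewrite Rmult_1_l. replace (-1 * x) with (- x) by ring. field.
  - apply analytic1_plus; apply analytic1_scaled_exp; lra.
Qed.

(* Coefficients of [1 / sum a_n x^n]; the table [ps_inv_table a n] stores the first [n + 1]
   of them, which makes the course-of-values recursion structural. *)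
Fixpoint ps_inv_table (a : nat -> R) (n : nat) : nat -> R :=
  match n with
  | O => fun _ => / a O
  | S m => fun k => if Nat.leb k m then ps_inv_table a m k
                    else - / a O * sum_f_R0 (fun j => a (S j) * ps_inv_table a m (m - j)) m
  end.

Definition ps_inv (a : nat -> R) (n : nat) : R := ps_inv_table a n n.

Lemma ps_inv_table_stable a m k : (k <= m)%nat -> ps_inv_table a m k = ps_inv a k.
Proof.
  revert k. induction m as [|m IH]; intros k Hk.
  - replace k with O by lia. reflexivity.
  - destruct (Nat.leb k m) eqn:E.
    + simpl. rewrite E. apply IH, Nat.leb_le, E.
    + apply Nat.leb_gt in E. replace k with (S m) by lia. reflexivity.
Qed.

Lemma ps_inv_succ a m :
  ps_inv a (S m) = - / a O * sum_f_R0 (fun j => a (S j) * ps_inv a (m - j)) m.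
Proof.
  unfold ps_inv at 1. simpl.
  replace (match m with O => false | S m' => Nat.leb m m' end) with false
    by (destruct m; [reflexivity | symmetry; apply Nat.leb_gt; lia]).
  f_equal. apply sum_eq. intros i Hi. rewrite ps_inv_table_stable by lia. reflexivity.
Qed.

Lemma PS_mult_ps_inv a : a O <> 0 -> forall n, PS_mult a (ps_inv a) n = ps_const 1 n.
Proof.
  intros Ha [|m]; unfold PS_mult.
  - simpl. unfold ps_inv. simpl. field. exact Ha.
  - rewrite decomp_sum by lia. simpl pred. rewrite Nat.sub_0_r, ps_inv_succ. simpl ps_const.
    change (sum_f_R0 (fun i => a (S i) * ps_inv a (S m - S i)) m)
      with (sum_f_R0 (fun j => a (S j) * ps_inv a (m - j)) m).
    field. exact Ha.
Qed.

Lemma sum_inv_pow_le q m : 1 < q -> sum_f_R0 (fun j => (/ q) ^ S j) m <= / (q - 1).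
Proof.
  intros Hq.
  assert (Hiq : 0 < / q < 1) by (split; [apply Rinv_0_lt_compat | rewrite <- Rinv_1; apply Rinv_lt_contravar]; lra).
  rewrite (sum_eq _ (fun j => (/ q) ^ j * / q)) by (intros; simpl; ring).
  rewrite <- scal_sum, tech3 by lra.
  assert (0 <= (/ q) ^ S m) by (apply pow_le; lra).
  replace (/ (q - 1)) with (/ q * (1 / (1 - / q))) by (field; lra).
  apply Rmult_le_compat_l; [lra|].
  apply Rmult_le_compat_r; [left; apply Rinv_0_lt_compat |]; lra.
Qed.

Section ReciprocalBound.

Variables (a : nat -> R) (K rho : R).
Hypothesis Ha0 : a O <> 0.
Hypothesis Hrho : 0 < rho.
Hypothesis HK : 0 <= K.
Hypothesis Ha_bound : forall n, Rabs (a n) * rho ^ n <= K.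

Local Notation B := (/ Rabs (a O)).
Local Notation q := (2 + K * / Rabs (a O)).
Local Notation D := ((2 + K * / Rabs (a O)) / rho).

Lemma ps_inv_bound_consts : 0 < B /\ 0 <= K * B /\ 0 < D.
Proof.
  assert (HB : 0 < B) by (apply Rinv_0_lt_compat, Rabs_pos_lt, Ha0).
  assert (HKB : 0 <= K * B) by (apply Rmult_le_pos; lra).
  repeat split; try assumption. apply Rdiv_lt_0_compat; lra.
Qed.

Lemma ps_inv_term_bound n j : (j <= n)%nat -> Rabs (ps_inv a (n - j)) <= B * D ^ (n - j) ->
  Rabs (a (S j) * ps_inv a (n - j)) <= K * B * D ^ S n * (/ q) ^ S j.
Proof.
  intros Hj Hb. destruct ps_inv_bound_consts as [HB [HKB HD]]. rewrite Rabs_mult.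
  assert (H1 : Rabs (a (S j)) <= K / rho ^ S j).
  { pose proof (pow_lt rho (S j) Hrho). specialize (Ha_bound (S j)).
    apply Rmult_le_reg_r with (rho ^ S j); [assumption|]. field_simplify; lra. }
  eapply Rle_trans; [apply Rmult_le_compat; try apply Rabs_pos; [exact H1 | exact Hb]|].
  right. replace (S n) with ((n - j) + S j)%nat by lia. rewrite pow_add.
  replace (K * B * (D ^ (n - j) * D ^ S j) * (/ q) ^ S j)
    with (K * B * D ^ (n - j) * (D * / q) ^ S j) by (rewrite Rpow_mult_distr; ring).
  pose proof (Rabs_pos_lt _ Ha0).
  replace (D * / q) with (/ rho) by (field; repeat split; lra).
  rewrite pow_inv. unfold Rdiv. ring.
Qed.

(* Summing the term bounds: [sum_j K B D^(n+1) q^-(j+1) <= K B D^(n+1) / (q - 1) <= D^(n+1)]. *)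
Lemma ps_inv_bound_succ n : (forall k, (k <= n)%nat -> Rabs (ps_inv a k) <= B * D ^ k) ->
  Rabs (ps_inv a (S n)) <= B * D ^ S n.
Proof.
  intros IH. destruct ps_inv_bound_consts as [HB [HKB HD]].
  rewrite ps_inv_succ, Rabs_mult, Rabs_Ropp, Rabs_inv.
  assert (Hgeom := sum_inv_pow_le q n ltac:(lra)).
  assert (Hratio : K * B * / (q - 1) <= 1).
  { apply Rmult_le_reg_r with (q - 1); [lra|]. rewrite Rmult_assoc, Rinv_l by lra. lra. }
  assert (HDn : 0 <= D ^ S n) by (apply pow_le; lra).
  apply Rmult_le_compat_l; [lra|].
  eapply Rle_trans; [apply sum_f_R0_triangle|].
  eapply Rle_trans; [apply sum_Rle; intros j Hj; apply ps_inv_term_bound, IH; lia|].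
  replace (sum_f_R0 (fun j => K * B * D ^ S n * (/ q) ^ S j) n)
    with (K * B * D ^ S n * sum_f_R0 (fun j => (/ q) ^ S j) n)
    by (rewrite scal_sum; apply sum_eq; intros; ring).
  apply Rle_trans with (K * B * D ^ S n * / (q - 1)).
  - apply Rmult_le_compat_l; [apply Rmult_le_pos; lra | exact Hgeom].
  - replace (K * B * D ^ S n * / (q - 1)) with (K * B * / (q - 1) * D ^ S n) by ring. nra.
Qed.

Lemma ps_inv_bound n : Rabs (ps_inv a n) <= B * D ^ n.
Proof.
  induction n as [n IH] using (well_founded_induction Wf_nat.lt_wf).
  destruct n as [|n].
  - unfold ps_inv. simpl. rewrite Rabs_inv. lra.
  - apply ps_inv_bound_succ. intros k Hk. apply IH. lia.
Qed.

End ReciprocalBound.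

Lemma CV_radius_ps_inv_pos a rho : a O <> 0 -> 0 < rho -> Rbar_lt rho (CV_radius a) ->
  exists r, 0 < r /\ Rbar_le r (CV_radius (ps_inv a)).
Proof.
  intros Ha Hrho Hc.
  assert (Hd := CV_disk_inside a rho ltac:(rewrite Rabs_pos_eq by lra; exact Hc)).
  apply ex_series_lim_0, is_lim_seq_bounded in Hd. destruct Hd as [K HK].
  assert (HK0 : 0 <= K) by (eapply Rle_trans; [apply Rabs_pos | apply (HK O)]).
  assert (Hb : forall n, Rabs (a n) * rho ^ n <= K).
  { intros n. specialize (HK n).
    rewrite Rabs_Rabsolu, Rabs_mult, (Rabs_pos_eq (rho ^ n)) in HK by (apply pow_le; lra). exact HK. }
  destruct (ps_inv_bound_consts a K rho Ha Hrho HK0) as [HB [_ HD]].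
  assert (Hbb := ps_inv_bound a K rho Ha Hrho HK0 Hb).
  set (B := / Rabs (a O)) in *. set (D := (2 + K * B) / rho) in *.
  exists (/ D). split; [apply Rinv_0_lt_compat, HD|].
  destruct (CV_radius_bounded (ps_inv a)) as [Hub _]. apply Hub. exists B. intros n.
  rewrite Rabs_mult. eapply Rle_trans; [apply Rmult_le_compat_r; [apply Rabs_pos | apply Hbb]|].
  rewrite <- RPow_abs, Rabs_pos_eq by (left; apply Rinv_0_lt_compat, HD).
  rewrite Rmult_assoc, <- Rpow_mult_distr, Rinv_r, pow1 by lra. lra.
Qed.

Lemma analytic1_inv f : analytic1 f -> (forall x, f x <> 0) -> analytic1 (fun x => / f x).
Proof.
  intros Hf Hnz x0. destruct (Hf x0) as [a [r [Hr [Hc Hfa]]]].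
  assert (Ha : a O <> 0).
  { rewrite <- PSeries_0, <- (Rminus_eq_0 x0) at 1.
    rewrite <- Hfa by (rewrite Rminus_eq_0, Rabs_R0; exact Hr). apply Hnz. }
  destruct (CV_radius_ps_inv_pos a (r / 2) Ha ltac:(lra)
              (Rbar_lt_le_trans (r / 2) r _ ltac:(simpl; lra) Hc)) as [r' [Hr' Hc']].
  exists (ps_inv a), (Rmin r r'). pose proof (Rmin_l r r'). pose proof (Rmin_r r r').
  split; [apply Rmin_glb_lt; assumption|]. split; [eapply Rbar_le_trans; [|exact Hc']; exact H0|].
  intros x Hx.
  assert (E := PSeries_mult a (ps_inv a) (x - x0)
                 (Rbar_lt_CV_radius a r (x - x0) Hc ltac:(lra)) (Rbar_lt_CV_radius _ r' (x - x0) Hc' ltac:(lra))).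
  rewrite (PSeries_ext _ (ps_const 1)), PSeries_ps_const, <- Hfa in E by (apply PS_mult_ps_inv, Ha || lra).
  specialize (Hnz x). field_simplify_eq; [exact E | exact Hnz].
Qed.

Lemma PS_derive_PS_Int a n : PS_derive (PS_Int a) n = a n.
Proof. unfold PS_derive, PS_Int. field. apply not_0_INR. lia. Qed.

Lemma analytic1_primitive f g : (forall x, is_derive f x (g x)) -> analytic1 g -> analytic1 f.
Proof.
  intros Hd Hg x0. destruct (Hg x0) as [a [r [Hr [Hc Hga]]]].
  assert (HcI : Rbar_le r (CV_radius (PS_Int a))) by (rewrite CV_radius_Int; exact Hc).
  assert (HI : forall y, Rabs y < r -> ex_pseries (PS_Int a) y)
    by (intros; apply CV_radius_inside, (Rbar_lt_CV_radius _ r); assumption).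
  exists (PS_plus (ps_const (f x0)) (PS_Int a)), r. split; [exact Hr|]. split.
  - apply CV_radius_ge_of_ex_pseries. intros y Hy.
    apply ex_pseries_plus; [apply ex_pseries_ps_const | apply HI; rewrite Rabs_pos_eq; lra].
  - intros x Hx. rewrite PSeries_plus, PSeries_ps_const; [| apply ex_pseries_ps_const | apply HI, Hx].
    set (h := fun t => f t - PSeries (PS_Int a) (t - x0)).
    assert (Hh : forall t, Rabs (t - x0) < r -> is_derive h t 0).
    { intros t Ht. eapply is_derive_eq.
      - apply (is_derive_minus f (fun t => PSeries (PS_Int a) (t - x0))); [apply Hd|].
        apply (is_derive_comp (PSeries (PS_Int a)) (fun t => t - x0)).
        + apply is_derive_PSeries, (Rbar_lt_CV_radius _ r); assumption.
        + auto_derive; [exact I | reflexivity].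
      - unfold_R_ops. rewrite (PSeries_ext _ a) by apply PS_derive_PS_Int.
        rewrite <- Hga by exact Ht. ring. }
    assert (Heq : h x0 = h x).
    { destruct (Rle_lt_dec x0 x) as [Hle | Hlt]; [destruct (Rle_lt_or_eq_dec _ _ Hle) as [Hlt | ->]|];
        [| reflexivity |];
        [| symmetry]; apply (eq_is_derive h); try assumption; intros t Ht; apply Hh;
        apply Rabs_lt_between'; apply Rabs_lt_between' in Hx; lra. }
    unfold h in Heq. rewrite Rminus_eq_0, PSeries_0 in Heq. unfold PS_Int at 1 in Heq. lra.
Qed.

Lemma analytic1_sech : analytic1 sech.
Proof. apply (analytic1_inv cosh analytic1_cosh). intros x. apply Rgt_not_eq, cosh_pos. Qed.

Lemma analytic1_tanh : analytic1 tanh.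
Proof.
  apply analytic1_ext with (fun x => sinh x * sech x).
  - intros x. reflexivity.
  - apply analytic1_mult; [apply analytic1_sinh | apply analytic1_sech].
Qed.

Lemma analytic1_lncosh : analytic1 lncosh.
Proof. apply (analytic1_primitive lncosh tanh is_derive_lncosh analytic1_tanh). Qed.

Lemma analytic2_ext f g : (forall u v, f u v = g u v) -> analytic2 f -> analytic2 g.
Proof.
  intros E H u0 v0. destruct (H u0 v0) as [c [r [Hr Hf]]]. exists c, r. split; [exact Hr|].
  intros u v Hu Hv. destruct (Hf u v Hu Hv) as [H1 [H2 H3]]. rewrite <- E. auto.
Qed.

Lemma analytic2_tensor g h : analytic1 g -> analytic1 h -> analytic2 (fun u v => g u * h v).
Proof.
  intros Hg Hh u0 v0. destruct (Hg u0) as [a [r1 [Hr1 [Hc1 Hga]]]]. destruct (Hh v0) as [b [r2 [Hr2 [Hc2 Hhb]]]].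
  exists (fun m n => a m * b n), (Rmin r1 r2). split; [apply Rmin_glb_lt; assumption|].
  intros u v Hu Hv. pose proof (Rmin_l r1 r2). pose proof (Rmin_r r1 r2).
  set (x := u - u0) in *. set (y := v - v0) in *.
  assert (Ea := CV_disk_inside a x (Rbar_lt_CV_radius a r1 x Hc1 ltac:(lra))).
  assert (Eb := CV_disk_inside b y (Rbar_lt_CV_radius b r2 y Hc2 ltac:(lra))).
  assert (Hab : forall m n, Rabs (a m * b n * x ^ m * y ^ n) = Rabs (a m * x ^ m) * Rabs (b n * y ^ n))
    by (intros; rewrite <- Rabs_mult; f_equal; ring).
  split; [|split].
  - intros m. apply (ex_series_ext (fun n => Rabs (a m * x ^ m) * Rabs (b n * y ^ n))).
    + intros n. symmetry. apply Hab.
    + exact (ex_series_scal_l _ _ Eb).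
  - apply (ex_series_ext (fun m => Rabs (a m * x ^ m) * Series (fun n => Rabs (b n * y ^ n)))).
    + intros m. rewrite <- Series_scal_l. apply Series_ext. intros n. symmetry. apply Hab.
    + apply ex_series_scal_r, Ea.
  - rewrite Hga, Hhb by (unfold x, y in *; lra). fold x y. rewrite !PSeries_as_Series.
    rewrite <- Series_scal_r. apply Series_ext. intros m.
    rewrite <- Series_scal_l. apply Series_ext. intros n. ring.
Qed.

Definition abs_summable2 (t : nat -> nat -> R) :=
  (forall m, ex_series (fun n => Rabs (t m n))) /\ ex_series (fun m => Series (fun n => Rabs (t m n))).

Lemma abs_summable2_plus t1 t2 :
  abs_summable2 t1 -> abs_summable2 t2 -> abs_summable2 (fun m n => t1 m n + t2 m n).
Proof.
  intros [A1 B1] [A2 B2].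
  assert (Htri : forall m n, Rabs (Rabs (t1 m n + t2 m n)) <= Rabs (t1 m n) + Rabs (t2 m n))
    by (intros; rewrite Rabs_Rabsolu; apply Rabs_triang).
  assert (A : forall m, ex_series (fun n => Rabs (t1 m n + t2 m n)))
    by (intros m; exact (ex_series_le (fun n => Rabs (t1 m n + t2 m n)) _ (Htri m)
                           (ex_series_plus _ _ (A1 m) (A2 m)))).
  split; [exact A|].
  apply (ex_series_le (fun m => Series (fun n => Rabs (t1 m n + t2 m n)))
                      (fun m => Series (fun n => Rabs (t1 m n)) + Series (fun n => Rabs (t2 m n))));
    [|exact (ex_series_plus _ _ B1 B2)].
  intros m. rewrite Rabs_pos_eq.
  - rewrite <- Series_plus by (apply A1 || apply A2).
    apply Series_le; [|exact (ex_series_plus _ _ (A1 m) (A2 m))].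
    intros n. split; [apply Rabs_pos | rewrite <- Rabs_Rabsolu; apply Htri].
  - exact (Rle_trans _ _ _ (Rabs_pos _) (Series_Rabs _ (A m))).
Qed.

Lemma ex_series_Series_of_abs_summable2 t : abs_summable2 t -> ex_series (fun m => Series (t m)).
Proof.
  intros [A B]. exact (ex_series_le (fun m => Series (t m)) _ (fun m => Series_Rabs _ (A m)) B).
Qed.

Lemma Series2_plus t1 t2 : abs_summable2 t1 -> abs_summable2 t2 ->
  Series (fun m => Series (fun n => t1 m n + t2 m n))
  = Series (fun m => Series (t1 m)) + Series (fun m => Series (t2 m)).
Proof.
  intros H1 H2.
  rewrite <- Series_plus by (apply ex_series_Series_of_abs_summable2; assumption).
  apply Series_ext. intros m.
  apply Series_plus; apply ex_series_Rabs; [apply H1 | apply H2].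
Qed.

Lemma analytic2_plus f g : analytic2 f -> analytic2 g -> analytic2 (fun u v => f u v + g u v).
Proof.
  intros Hf Hg u0 v0. destruct (Hf u0 v0) as [c1 [r1 [Hr1 H1]]]. destruct (Hg u0 v0) as [c2 [r2 [Hr2 H2]]].
  exists (fun m n => c1 m n + c2 m n), (Rmin r1 r2). split; [apply Rmin_glb_lt; assumption|].
  intros u v Hu Hv. pose proof (Rmin_l r1 r2). pose proof (Rmin_r r1 r2).
  destruct (H1 u v ltac:(lra) ltac:(lra)) as [A1 [B1 E1]].
  destruct (H2 u v ltac:(lra) ltac:(lra)) as [A2 [B2 E2]].
  destruct (abs_summable2_plus _ _ (conj A1 B1) (conj A2 B2)) as [A B].
  assert (Hext : forall m n, (c1 m n + c2 m n) * (u - u0) ^ m * (v - v0) ^ n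
                 = c1 m n * (u - u0) ^ m * (v - v0) ^ n + c2 m n * (u - u0) ^ m * (v - v0) ^ n)
    by (intros; ring).
  split; [|split].
  - intros m. apply (ex_series_ext _ _ (fun n => f_equal Rabs (eq_sym (Hext m n))) (A m)).
  - apply (ex_series_ext _ _ (fun m => Series_ext _ _ (fun n => f_equal Rabs (eq_sym (Hext m n)))) B).
  - rewrite E1, E2, <- Series2_plus by (split; assumption).
    apply Series_ext. intros m. apply Series_ext. intros n. symmetry. apply Hext.
Qed.

Lemma analytic1_mult_const c f : analytic1 f -> analytic1 (fun x => f x * c).
Proof. intros H. apply analytic1_mult; [exact H | apply analytic1_const]. Qed.

Lemma chart_analytic p w : analytic_param (chart p w).
Proof.
  intros i Hi. destruct (Nat.lt_ge_cases i 3) as [H3|H3].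
  - apply analytic2_ext with (fun u v => (sech u * coord4 i (p, 0)) * sech v
      + (tanh u * coord4 i (w, 0)) * 1 + (sech u * coord4 i (cross3 p w, 0)) * tanh v).
    { intros u v. unfold chart. rewrite coord4_frame_vec by exact H3. ring. }
    repeat apply analytic2_plus; apply analytic2_tensor;
      solve [apply analytic1_mult_const; (apply analytic1_sech || apply analytic1_tanh)
            | apply analytic1_sech | apply analytic1_tanh | apply analytic1_const].
  - replace i with 3%nat by lia.
    apply analytic2_ext with (fun u v => lncosh u * 1 + 1 * lncosh v).
    { intros u v. unfold chart. rewrite coord4_3. ring. }
    apply analytic2_plus; apply analytic2_tensor; (apply analytic1_lncosh || apply analytic1_const).
Qed.

Theorem lemma3p4 (p : V3) (gam : R -> V3) (rho : R -> R) :
  on_sphere p -> unit_speed_great_circle gam -> gam 0 = p ->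
  is_rho_sol 1 rho ->
  (* explicit formulas *)
  (forall s, rho s = PI / 2 - 2 * atan (exp (- s))) /\
  (forall s, t_fun 1 rho s = ln (cosh s)) /\
  (forall s, - (PI / 2) < rho s < PI / 2) /\
  (* alpha_1 is the graph t = -log cos rho, rho in ]-pi/2, pi/2[ *)
  (forall r t, (exists s, rho s = r /\ t_fun 1 rho s = t) <->
               (- (PI / 2) < r < PI / 2 /\ t = - ln (cos r))) /\
  (* complete: arc-length parametrized (metric d rho^2 + dt^2) on all of R *)
  (forall s, ex_derive rho s /\ ex_derive (t_fun 1 rho) s /\
             (Derive rho s) ^ 2 + (Derive (t_fun 1 rho) s) ^ 2 = 1) /\
  (* open: not a closed (compact) curve *)
  (forall M, exists s, M < Rabs (t_fun 1 rho s)) /\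
  (* embedded in Gamma x R *)
  (forall s s', cyl_curve gam rho (t_fun 1 rho) s = cyl_curve gam rho (t_fun 1 rho) s' -> s = s') /\
  (forall (sn : nat -> R) (s : R),
      seq_cv4 (fun n => cyl_curve gam rho (t_fun 1 rho) (sn n)) (cyl_curve gam rho (t_fun 1 rho) s) ->
      is_lim_seq sn (Finite s)) /\
  (* invariant under (rho, t) |-> (-rho, t) *)
  (forall s, exists s', rho s' = - rho s /\ t_fun 1 rho s' = t_fun 1 rho s) /\
  (* the surface S(1) *)
  (forall x, rotational_surface p gam rho (t_fun 1 rho) x -> in_S2xR x) /\
  closed4 (rotational_surface p gam rho (t_fun 1 rho)) /\
  exists X : R -> R -> P4,
    homeo_onto X (rotational_surface p gam rho (t_fun 1 rho)) /\
    analytic_param X /\ regular_param X /\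
    complete_param X /\ totally_umbilic_param X.
Proof.
  intros Hp Hgam H0 Hrho.
  destruct (great_circle_frame p gam Hgam H0) as [w [Hpw Hgw]].
  assert (Et : t_fun 1 rho = lncosh)
    by (apply functional_extensionality; apply t_fun_eq_lncosh, Hrho).
  assert (Erho : rho = gd) by (apply functional_extensionality; apply rho_eq_gd, Hrho).
  rewrite Et, Erho.
  rewrite (rotational_surface_eq p w gam Hpw Hgw).
  split; [reflexivity|]. split; [reflexivity|].
  split; [apply gd_bound|]. split; [apply gd_lncosh_graph|].
  split; [apply gd_lncosh_unit_speed|]. split; [apply lncosh_unbounded|].
  split; [apply (profile_curve_inj p w gam Hpw Hgw)|].
  split; [apply (profile_curve_proper p w gam Hpw Hgw)|].
  split; [intros s; exists (- s); rewrite gd_odd, lncosh_even; split; reflexivity|].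
  split; [intros x [Hx _]; exact Hx|].
  split; [apply (hemisphere_graph_closed p w Hpw)|].
  exists (chart p w).
  split; [apply (chart_homeo p w Hpw)|]. split; [apply chart_analytic|].
  split; [apply (chart_regular p w Hpw)|]. split; [apply (chart_complete p w Hpw)|].
  apply (chart_totally_umbilic p w Hpw).
Qed.
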